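(* Let $T(x,y)=(x+\alpha,\,py+f(x))$ on $\mathbb T^2$ with $\alpha$ irrational and $p$ an integer with $|p|\ge2$, and let $\mu$ be the probability measure supported on the graph $\{(x,\gamma(x))\}$ of $\gamma:\mathbb T\to\mathbb T$ which projects to Lebesgue measure on the first coordinate. If $f$ and $\gamma$ are real analytic, then either $T^n_*\mu$ converges weak$^*$ to Lebesgue measure on $\mathbb T^2$, or there is a constant $c$ such that $f(x)=\gamma(x+\alpha)-p\gamma(x)+c$ for all $x\in\mathbb T$.
   Context: $\mathbb T=\mathbb R/\mathbb Z$; $T^n_*\mu$ denotes the push-forward of $\mu$ under $T^n$. *)

From Stdlib Require Import Reals Lra ZArith ClassicalEpsilon.
Open Scope R_scope.

(* Riemann integral of g over [a,b] (0 if g is not Riemann integrable there;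
   the value does not depend on the integrability witness, RiemannInt_P5). *)
Definition Rint (g : R -> R) (a b : R) : R :=
  match excluded_middle_informative (inhabited (Riemann_integrable g a b)) with
  | left H => RiemannInt (epsilon H (fun _ => True))
  | right _ => 0
  end.

Definition irrational (a : R) : Prop :=
  forall (m n : Z), n <> 0%Z -> a * IZR n <> IZR m.

Definition real_analytic (F : R -> R) : Prop :=
  forall x0 : R, exists r : R, 0 < r /\ exists an : nat -> R,
    forall x, Rabs (x - x0) < r -> Pser an (x - x0) (F x).

(* F : R -> R is the lift of a map T -> T (T = R/Z) *)
Definition circle_lift (F : R -> R) : Prop :=
  forall x, exists k : Z, F (x + 1) = F x + IZR k.

(* continuous functions on T^2, as doubly 1-periodic jointly continuous
   functions R -> R -> R *)
Definition cont_T2 (phi : R -> R -> R) : Prop :=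
  (forall x y, phi (x + 1) y = phi x y /\ phi x (y + 1) = phi x y) /\
  (forall x y eps, 0 < eps -> exists delta, 0 < delta /\
     forall x' y', Rabs (x' - x) < delta -> Rabs (y' - y) < delta ->
       Rabs (phi x' y' - phi x y) < eps).

(* second coordinate (lifted) of T^n (x, Gamma x), where
   T(x,y) = (x + alpha, p y + F x) *)
Fixpoint orbit_y (alpha p : R) (F Gamma : R -> R) (n : nat) (x : R) : R :=
  match n with
  | O => Gamma x
  | S k => p * orbit_y alpha p F Gamma k x + F (x + INR k * alpha)
  end.

(* integral of phi against T^n_* mu, mu = graph measure of Gamma over Lebesgue *)
Definition push_integral (alpha p : R) (F Gamma : R -> R) (n : nat)
  (phi : R -> R -> R) : R :=
  Rint (fun x => phi (x + INR n * alpha) (orbit_y alpha p F Gamma n x)) 0 1.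

Definition leb_T2 (phi : R -> R -> R) : R :=
  Rint (fun x => Rint (fun y => phi x y) 0 1) 0 1.

Definition pushforward_equidistributes (alpha p : R) (F Gamma : R -> R) : Prop :=
  forall phi, cont_T2 phi ->
    Un_cv (fun n => push_integral alpha p F Gamma n phi) (leb_T2 phi).

(* Write y_n(x) for the lifted fibre coordinate of T^n (x, gamma x), so that T^n_* mu is the
   image of Lebesgue measure under x |-> (x + n alpha, y_n x). Differentiating
   y_(n+1) x = p y_n x + f (x + n alpha) gives
     y_n' x / p ^ n = gamma' x + sum_(j < n) p ^ -(j+1) f' (x + j alpha),
   which converges uniformly, at rate |p| ^ -n, to the real-analytic function
     h x = gamma' x + sum_j p ^ -(j+1) f' (x + j alpha),
   and h (x + alpha) - p h x = gamma' (x + alpha) - p gamma' x - f' x.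
   If the zeros of h accumulate somewhere, h vanishes identically by the identity theorem, and
   then gamma (x + alpha) - p gamma x - f x has zero derivative: f is a coboundary up to a constant.
   Otherwise the zeros of h in a period are finitely many. Away from them |y_n'| is of order
   |p| ^ n and nearly constant on short intervals, so there the integral of phi (x + n alpha, y_n x)
   is close, by a van der Corput estimate, to that of the fibre mean of phi at x + n alpha; near the
   zeros the contribution is small. Integrating the fibre mean over a period gives the Lebesgue
   integral of phi whatever the translation n alpha, hence the weak-* convergence. *)

From Stdlib Require Import Reals Lra Lia ZArith Classical ClassicalEpsilon FunctionalExtensionality.
Open Scope R_scope.

(** * Inequalities, sequences and series *)

Lemma Rabs_le_inv x a : Rabs x <= a -> -a <= x <= a.
Proof. unfold Rabs; destruct (Rcase_abs x); lra. Qed.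

Lemma Rdiv_nonneg a b : 0 <= a -> 0 < b -> 0 <= a / b.
Proof. intros. apply Rmult_le_pos; auto. left; apply Rinv_0_lt_compat; auto. Qed.

Lemma Rdiv_lt_1 a b : 0 <= a < b -> a / b < 1.
Proof. intros. apply Rmult_lt_reg_r with b; [lra|]. unfold Rdiv. rewrite Rmult_assoc, Rinv_l; lra. Qed.

Lemma pow_le_1 x n : 0 <= x <= 1 -> x ^ n <= 1.
Proof. intros. rewrite <- (pow1 n). apply pow_incr; lra. Qed.

Lemma pow_decr x m n : 0 <= x <= 1 -> (m <= n)%nat -> x ^ n <= x ^ m.
Proof.
  intros Hx Hmn. replace n with (m + (n - m))%nat by lia. rewrite pow_add.
  rewrite <- (Rmult_1_r (x ^ m)) at 2. apply Rmult_le_compat_l; [apply pow_le; lra|apply pow_le_1; auto].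
Qed.


Lemma Un_cv_const (c : R) : Un_cv (fun _ => c) c.
Proof. intros e He; exists 0%nat; intros; unfold Rdist; rewrite Rminus_diag, Rabs_R0; lra. Qed.

Lemma Un_cv_le_eventually (a b : nat -> R) la lb N :
  Un_cv a la -> Un_cv b lb -> (forall n, (n >= N)%nat -> a n <= b n) -> la <= lb.
Proof.
  intros Ha Hb H. destruct (Rle_lt_dec la lb) as [|Hlt]; auto.
  set (e := (la - lb) / 2). assert (He : e > 0) by (unfold e; lra).
  destruct (Ha e He) as [N1 H1]. destruct (Hb e He) as [N2 H2].
  specialize (H1 (N + N1 + N2)%nat ltac:(lia)). specialize (H2 (N + N1 + N2)%nat ltac:(lia)).
  specialize (H (N + N1 + N2)%nat ltac:(lia)). unfold Rdist in *.
  apply Rabs_def2 in H1. apply Rabs_def2 in H2. unfold e in *; lra.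
Qed.

Lemma Un_cv_ext (a b : nat -> R) l : (forall n, a n = b n) -> Un_cv a l -> Un_cv b l.
Proof. intros E H e He; destruct (H e He) as [N HN]; exists N; intros; rewrite <- E; auto. Qed.

Lemma Un_cv_scal (a : nat -> R) l c : Un_cv a l -> Un_cv (fun n => c * a n) (c * l).
Proof. intros H. apply CV_mult; auto using Un_cv_const. Qed.

Lemma pow_Un_cv_0 q : 0 <= q < 1 -> Un_cv (fun K => q ^ S K) 0.
Proof.
  intros Hq e He. destruct (pow_lt_1_zero q ltac:(rewrite Rabs_pos_eq; lra) e He) as [N HN].
  exists N. intros n Hn. unfold Rdist. rewrite Rminus_0_r. apply HN. lia.
Qed.

Lemma infinite_sum_ext u v l : (forall n, u n = v n) -> infinite_sum u l -> infinite_sum v l.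
Proof. intros E. apply Un_cv_ext. intro; apply sum_eq; auto. Qed.

Lemma infinite_sum_plus u v a b : infinite_sum u a -> infinite_sum v b ->
  infinite_sum (fun n => u n + v n) (a + b).
Proof.
  intros Hu Hv. apply (Un_cv_ext (fun N => sum_f_R0 u N + sum_f_R0 v N)).
  - intro; rewrite plus_sum; auto.
  - apply CV_plus; auto.
Qed.

Lemma infinite_sum_scal u a c : infinite_sum u a -> infinite_sum (fun n => c * u n) (c * a).
Proof.
  intros Hu. apply (Un_cv_ext (fun N => c * sum_f_R0 u N)).
  - intro; rewrite scal_sum; apply sum_eq; intros; ring.
  - apply Un_cv_scal; auto.
Qed.

Lemma infinite_sum_minus u v a b : infinite_sum u a -> infinite_sum v b ->
  infinite_sum (fun n => u n - v n) (a - b).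
Proof.
  intros Hu Hv. apply (infinite_sum_ext (fun n => u n + -1 * v n)); [intros; ring|].
  replace (a - b) with (a + -1 * b) by ring. apply infinite_sum_plus, infinite_sum_scal; auto.
Qed.

Lemma infinite_sum_finite u n : (forall k, (n < k)%nat -> u k = 0) -> infinite_sum u (sum_f_R0 u n).
Proof.
  intros H e He. exists n. intros m Hm. unfold Rdist.
  destruct (Nat.eq_dec m n) as [->|Hne]; [rewrite Rminus_diag, Rabs_R0; auto|].
  rewrite (tech2 u n m) by lia.
  rewrite (sum_eq (fun i => u (S n + i)%nat) (fun _ => 0)) by (intros; apply H; lia).
  rewrite sum_cte. replace (sum_f_R0 u n + 0 * INR (S (m - S n)) - sum_f_R0 u n) with 0 by ring.
  rewrite Rabs_R0; auto.
Qed.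

Lemma infinite_sum_partial_le u l N : (forall n, 0 <= u n) -> infinite_sum u l -> sum_f_R0 u N <= l.
Proof.
  intros Hp Hl. apply (Un_cv_le_eventually _ _ _ _ N (Un_cv_const _) Hl). intros n Hn.
  induction Hn; [lra|]. simpl. specialize (Hp (S m)); lra.
Qed.

Lemma infinite_sum_nonneg u l : (forall n, 0 <= u n) -> infinite_sum u l -> 0 <= l.
Proof.
  intros Hp Hl. apply Rle_trans with (sum_f_R0 u 0); [apply Hp|]. apply infinite_sum_partial_le; auto.
Qed.

Lemma infinite_sum_comparison u v L : (forall n, Rabs (u n) <= v n) -> infinite_sum v L ->
  exists l, infinite_sum u l /\ Rabs l <= L.
Proof.
  intros H HL.
  assert (Ha : {l | Un_cv (fun N => sum_f_R0 (fun n => Rabs (u n)) N) l}).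
  { apply Rseries_CV_comp with v; [intros; split; auto; apply Rabs_pos | exists L; auto]. }
  destruct (cv_cauchy_2 _ (cauchy_abs _ (cv_cauchy_1 _ Ha))) as [l Hl].
  destruct Ha as [la Hla]. exists l; split; auto.
  assert (Rabs l <= la).
  { apply (Un_cv_le_eventually (fun N => Rabs (sum_f_R0 u N)) _ _ _ 0 (cv_cvabs _ _ Hl) Hla).
    intros; apply Rsum_abs. }
  assert (la <= L) by (apply (Un_cv_le_eventually _ _ _ _ 0 Hla HL); intros; apply sum_Rle; auto).
  lra.
Qed.

Lemma infinite_sum_dominated u v L : (forall n, Rabs (u n) <= v n) -> infinite_sum v L ->
  exists l, infinite_sum u l.
Proof. intros H HL; destruct (infinite_sum_comparison u v L H HL) as [l [? ?]]; eauto. Qed.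

Lemma infinite_sum_geometric q C : 0 <= q < 1 -> infinite_sum (fun n => C * q ^ n) (C / (1 - q)).
Proof.
  intros Hq. apply infinite_sum_scal.
  apply (infinite_sum_ext (fun n => 1 * q ^ n)); [intros; ring|].
  apply GP_infinite. rewrite Rabs_pos_eq; lra.
Qed.

Lemma infinite_sum_shift u l : infinite_sum u l -> infinite_sum (fun n => u (S n)) (l - u 0%nat).
Proof.
  intros H e He. destruct (H e He) as [N HN]. exists N. intros n Hn.
  specialize (HN (S n) ltac:(lia)). rewrite decomp_sum in HN by lia. unfold Rdist in *.
  replace (sum_f_R0 (fun k => u (S k)) n - (l - u 0%nat))
    with (u 0%nat + sum_f_R0 (fun k => u (S k)) (pred (S n)) - l) by (simpl; ring). auto.
Qed.

Lemma infinite_sum_unshift u l : infinite_sum (fun n => u (S n)) l -> infinite_sum u (u 0%nat + l).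
Proof.
  intros H e He. destruct (H e He) as [N HN]. exists (S N). intros n Hn.
  destruct n as [|n]; [lia|]. specialize (HN n ltac:(lia)). rewrite decomp_sum by lia.
  unfold Rdist in *. simpl pred.
  replace (u 0%nat + sum_f_R0 (fun k => u (S k)) n - (u 0%nat + l))
    with (sum_f_R0 (fun k => u (S k)) n - l) by ring. auto.
Qed.

Lemma infinite_sum_tail u U k : infinite_sum u U ->
  exists Uk, infinite_sum (fun m => u (m + k)%nat) Uk /\ ((forall n, 0 <= u n) -> Uk <= U).
Proof.
  intros H. induction k as [|k [Uk [H1 H2]]].
  - exists U. split; [apply (infinite_sum_ext u); auto; intros; rewrite Nat.add_0_r; auto | lra].
  - exists (Uk - u k). split.
    + apply (infinite_sum_ext _ _ _ (fun m => f_equal u (eq_sym (Nat.add_succ_r m k)))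
      (infinite_sum_shift _ _ H1)).
    + intros Hp. specialize (H2 Hp). specialize (Hp k). lra.
Qed.

Lemma infinite_sum_leading_zeros u l k : (forall n, (n < k)%nat -> u n = 0) ->
  infinite_sum (fun m => u (m + k)%nat) l -> infinite_sum u l.
Proof.
  revert u l. induction k as [|k IH]; intros u l Hz H.
  - apply (infinite_sum_ext _ _ _ (fun m => f_equal u (Nat.add_0_r m)) H).
  - replace l with (u 0%nat + l) by (rewrite (Hz 0%nat); [ring|lia]).
    apply infinite_sum_unshift, IH; [intros; apply Hz; lia|].
    apply (infinite_sum_ext _ _ _ (fun m => f_equal u (Nat.add_succ_r m k)) H).
Qed.

Lemma infinite_sum_drop_zeros u l k : (forall n, (n < k)%nat -> u n = 0) ->
  infinite_sum u l -> infinite_sum (fun m => u (m + k)%nat) l.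
Proof.
  intros Hz H. destruct (infinite_sum_tail u l k H) as [Uk [HUk _]].
  rewrite (uniqueness_sum _ _ _ H (infinite_sum_leading_zeros u Uk k Hz HUk)). auto.
Qed.

Lemma infinite_sum_tail_bound u v l L N : (forall n, Rabs (u n) <= v n) ->
  infinite_sum u l -> infinite_sum v L -> Rabs (l - sum_f_R0 u N) <= L - sum_f_R0 v N.
Proof.
  intros H Hu Hv.
  apply (Un_cv_le_eventually (fun M => Rabs (sum_f_R0 u M - sum_f_R0 u N))
           (fun M => sum_f_R0 v M - sum_f_R0 v N) _ _ N).
  - apply cv_cvabs, CV_minus; auto using Un_cv_const.
  - apply CV_minus; auto using Un_cv_const.
  - intros M HM. destruct (Nat.eq_dec N M) as [<-|NE]; [rewrite !Rminus_diag, Rabs_R0; lra|].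
    rewrite (tech2 u N M), (tech2 v N M) by lia.
    rewrite !(Rplus_comm (sum_f_R0 _ N)); unfold Rminus; rewrite !Rplus_assoc, !Rplus_opp_r, !Rplus_0_r.
    eapply Rle_trans; [apply Rsum_abs|]. apply sum_Rle; auto.
Qed.

Lemma infinite_sum_terms_small u l : infinite_sum u l ->
  forall e, 0 < e -> exists N, forall n, (n >= N)%nat -> Rabs (u n) < e.
Proof.
  intros H e He. destruct (H (e/2) ltac:(lra)) as [N HN]. exists (S N). intros [|n] Hn; [lia|].
  assert (A1 := HN (S n) ltac:(lia)). assert (A2 := HN n ltac:(lia)). unfold Rdist in *. simpl in A1.
  replace (u (S n)) with ((sum_f_R0 u n + u (S n) - l) - (sum_f_R0 u n - l)) by ring.
  eapply Rle_lt_trans; [apply Rabs_triang|]. rewrite Rabs_Ropp. lra.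
Qed.

Lemma finite_abs_bound (u : nat -> R) N : exists B, 0 <= B /\ forall n, (n <= N)%nat -> Rabs (u n) <= B.
Proof.
  induction N as [|N [B [HB HBB]]].
  - exists (Rabs (u 0%nat)). split; [apply Rabs_pos|]. intros n Hn. replace n with 0%nat by lia. lra.
  - exists (Rmax B (Rabs (u (S N)))). split; [apply Rle_trans with B; auto; apply Rmax_l|].
    intros n Hn. destruct (Nat.eq_dec n (S N)) as [->|Hne]; [apply Rmax_r|].
    apply Rle_trans with B; [apply HBB; lia|apply Rmax_l].
Qed.

Lemma infinite_sum_terms_bounded u l : infinite_sum u l ->
  exists B, 0 <= B /\ forall n, Rabs (u n) <= B.
Proof.
  intros H. destruct (infinite_sum_terms_small u l H 1 ltac:(lra)) as [N HN].
  destruct (finite_abs_bound u N) as [B [HB HBB]]. exists (Rmax B 1).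
  split; [apply Rle_trans with B; auto; apply Rmax_l|]. intros n.
  destruct (le_lt_dec n N); [apply Rle_trans with B; auto; apply Rmax_l|].
  apply Rle_trans with 1; [left; apply HN; lia|apply Rmax_r].
Qed.

Lemma sum_f_R0_scal_l c g n : sum_f_R0 (fun k => c * g k) n = c * sum_f_R0 g n.
Proof. rewrite scal_sum. apply sum_eq; intros; ring. Qed.

Lemma sum_f_R0_ge_term u N k : (forall n, 0 <= u n) -> (k <= N)%nat -> u k <= sum_f_R0 u N.
Proof.
  intros H Hk. induction N as [|N IH].
  - replace k with 0%nat by lia. simpl; lra.
  - simpl. destruct (Nat.eq_dec k (S N)) as [->|Hne].
    + assert (0 <= sum_f_R0 u N) by (apply cond_pos_sum; auto). lra.
    + specialize (H (S N)). assert (u k <= sum_f_R0 u N) by (apply IH; lia). lra.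
Qed.

Lemma C_nonneg n k : 0 <= C n k.
Proof.
  unfold C. apply Rmult_le_pos; [left; apply INR_fact_lt_0|].
  left; apply Rinv_0_lt_compat, Rmult_lt_0_compat; apply INR_fact_lt_0.
Qed.

Lemma binomial_term_le x y n k : 0 <= x -> 0 <= y -> (k <= n)%nat ->
  C n k * x ^ k * y ^ (n - k) <= (x + y) ^ n.
Proof.
  intros Hx Hy Hk. rewrite binomial.
  apply (sum_f_R0_ge_term (fun i => C n i * x ^ i * y ^ (n - i))); auto.
  intros i. apply Rmult_le_pos; [apply Rmult_le_pos; [apply C_nonneg|apply pow_le;
    auto]|apply pow_le; auto].
Qed.

(* Fubini for a double series whose row tails are uniformly controlled by [u j * e K]. *)
Lemma infinite_sum_interchange (b : nat -> nat -> R) (row col : nat -> R) S u U e :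
  (forall j, infinite_sum (b j) (row j)) -> infinite_sum row S ->
  (forall k, infinite_sum (fun j => b j k) (col k)) ->
  (forall j, 0 <= u j) -> infinite_sum u U -> Un_cv e 0 ->
  (forall j K, Rabs (row j - sum_f_R0 (b j) K) <= u j * e K) ->
  infinite_sum col S.
Proof.
  intros Hrow HS Hcol Hu HU He Hb.
  assert (Hfin : forall K, infinite_sum (fun j => sum_f_R0 (b j) K) (sum_f_R0 col K)).
  { induction K; simpl; [apply Hcol|apply infinite_sum_plus; auto]. }
  assert (HU0 : 0 <= U) by (apply infinite_sum_nonneg with u; auto).
  assert (Hbd : forall K, Rabs (S - sum_f_R0 col K) <= U * e K).
  { intros K.
    destruct (infinite_sum_comparison (fun j => row j - sum_f_R0 (b j) K) (fun j => e K * u j) (e K * U))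
      as [l [Hl1 Hl2]]; [intros j; rewrite Rmult_comm; auto | apply infinite_sum_scal; auto|].
    rewrite (uniqueness_sum _ _ _ (infinite_sum_minus _ _ _ _ HS (Hfin K)) Hl1). lra. }
  intros eps Heps. destruct (He (eps / (U + 1))) as [N HN]; [apply Rdiv_lt_0_compat; lra|].
  exists N. intros n Hn. unfold Rdist. rewrite Rabs_minus_sym.
  specialize (HN n Hn). unfold Rdist in HN. rewrite Rminus_0_r in HN. apply Rabs_def2 in HN.
  apply Rle_lt_trans with (U * (eps / (U + 1))).
  - eapply Rle_trans; [apply Hbd|]. apply Rmult_le_compat_l; lra.
  - apply Rmult_lt_reg_r with (U + 1); [lra|].
    replace (U * (eps / (U + 1)) * (U + 1)) with (U * eps) by (field; lra). nra.
Qed.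

Lemma continuity_cst c : continuity (fun _ => c).
Proof. apply continuity_const; intros ? ?; auto. Qed.

Lemma continuity_translate c : continuity (fun x => x + c).
Proof. apply continuity_plus; [apply derivable_continuous, derivable_id|apply continuity_cst]. Qed.

Lemma continuity_shift f c : continuity f -> continuity (fun x => f (x + c)).
Proof. intros Hf. apply (continuity_comp (fun x => x + c) f); auto using continuity_translate. Qed.

Lemma derivable_pt_lim_shift f c x a : derivable_pt_lim f (x + c) a ->
  derivable_pt_lim (fun y => f (y + c)) x a.
Proof.
  intros H. replace a with (a * (1 + 0)) by ring.
  apply (derivable_pt_lim_comp (fun y => y + c) f); auto.
  apply derivable_pt_lim_plus; [apply derivable_pt_lim_id|apply derivable_pt_lim_const].
Qed.

Lemma null_derivative_eq G a b : (forall x, derivable_pt_lim G x 0) -> G b = G a.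
Proof.
  intros H. assert (Hle : forall a b, a < b -> G b = G a).
  { intros u v Huv. destruct (MVT_cor2 G (fun _ => 0) u v Huv (fun x _ => H x)) as [c [Hc _]]. lra. }
  destruct (Rtotal_order a b) as [|[->|]]; [auto|auto|symmetry; auto].
Qed.

(** * Riemann integrals *)

Lemma Rint_RiemannInt g a b (pr : Riemann_integrable g a b) : Rint g a b = RiemannInt pr.
Proof.
  unfold Rint. destruct (excluded_middle_informative _) as [H|H].
  - apply RiemannInt_P5.
  - exfalso; apply H; constructor; auto.
Qed.

Lemma continuity_Riemann_integrable g a b : continuity g -> Riemann_integrable g a b.
Proof.
  intros H. destruct (Rle_dec a b).
  - apply continuity_implies_RiemannInt; auto.
  - apply RiemannInt_P1, continuity_implies_RiemannInt; auto; lra.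
Qed.

Section Rint_continuous.
Variables (f g : R -> R).
Hypotheses (Hf : continuity f) (Hg : continuity g).

Let Rint_f a b := Rint_RiemannInt f a b (continuity_Riemann_integrable f a b Hf).
Let Rint_g a b := Rint_RiemannInt g a b (continuity_Riemann_integrable g a b Hg).

Lemma Rint_chasles a b c : Rint f a b + Rint f b c = Rint f a c.
Proof. rewrite !Rint_f. apply RiemannInt_P26. Qed.

Lemma Rint_same a : Rint f a a = 0.
Proof. assert (E := Rint_chasles a a a). lra. Qed.

Lemma Rint_swap a b : Rint f a b = - Rint f b a.
Proof. rewrite !Rint_f. apply RiemannInt_P8. Qed.

Lemma Rint_lin l a b : Rint (fun x => f x + l * g x) a b = Rint f a b + l * Rint g a b.
Proof.
  rewrite Rint_f, Rint_g.
  rewrite (Rint_RiemannInt _ a b (RiemannInt_P10 l (continuity_Riemann_integrable f a b Hf)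
                                      (continuity_Riemann_integrable g a b Hg))).
  apply RiemannInt_P13.
Qed.

Lemma Rint_plus a b : Rint (fun x => f x + g x) a b = Rint f a b + Rint g a b.
Proof.
  rewrite <- (Rmult_1_l (Rint g a b)), <- Rint_lin.
  f_equal; apply functional_extensionality; intros; ring.
Qed.

Lemma Rint_minus a b : Rint (fun x => f x - g x) a b = Rint f a b - Rint g a b.
Proof.
  replace (Rint f a b - Rint g a b) with (Rint f a b + -1 * Rint g a b) by ring.
  rewrite <- Rint_lin. f_equal; apply functional_extensionality; intros; ring.
Qed.

Lemma Rint_le a b : a <= b -> (forall x, a <= x <= b -> f x <= g x) -> Rint f a b <= Rint g a b.
Proof. intros Hab E. rewrite Rint_f, Rint_g. apply RiemannInt_P19; auto. intros; apply E; lra. Qed.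

End Rint_continuous.

Lemma Rint_const c a b : Rint (fun _ => c) a b = c * (b - a).
Proof.
  change (Rint (fct_cte c) a b = c * (b - a)).
  rewrite (Rint_RiemannInt _ a b (RiemannInt_P14 a b c)). apply RiemannInt_P15.
Qed.

Lemma Rint_scal f c a b : continuity f -> Rint (fun x => c * f x) a b = c * Rint f a b.
Proof.
  intros Hf. assert (E := Rint_lin (fun _ => 0) f (continuity_cst 0) Hf c a b).
  rewrite Rint_const in E. replace (fun x => c * f x) with (fun x => 0 + c * f x).
  - rewrite E; ring.
  - apply functional_extensionality; intros; ring.
Qed.

Lemma Rint_abs_le f a b B : a <= b -> continuity f -> (forall x, a <= x <= b -> Rabs (f x) <= B) ->
  Rabs (Rint f a b) <= B * (b - a).
Proof.
  intros Hab Hf H. rewrite <- Rint_const. apply Rabs_le. split.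
  - replace (- Rint (fun _ => B) a b) with (Rint (fun _ => -B) a b) by (rewrite !Rint_const; ring).
    apply Rint_le; auto using continuity_cst. intros x Hx; specialize (H x Hx).
    apply Rabs_le_inv in H; lra.
  - apply Rint_le; auto using continuity_cst. intros x Hx; specialize (H x Hx).
    apply Rabs_le_inv in H; lra.
Qed.

Lemma Rint_abs_le_unordered f a b B : continuity f ->
  (forall x, Rmin a b <= x <= Rmax a b -> Rabs (f x) <= B) -> Rabs (Rint f a b) <= B * Rabs (b - a).
Proof.
  intros Hf H. destruct (Rle_dec a b).
  - rewrite Rmin_left, Rmax_right in H by lra. rewrite (Rabs_pos_eq (b - a)) by lra.
    apply Rint_abs_le; auto.
  - rewrite Rmin_right, Rmax_left in H by lra. rewrite Rint_swap, Rabs_Ropp by auto.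
    rewrite (Rabs_minus_sym b a), (Rabs_pos_eq (a - b)) by lra. apply Rint_abs_le; auto; lra.
Qed.

Lemma derivable_pt_lim_Rint f t : continuity f -> derivable_pt_lim (fun s => Rint f 0 s) t (f t).
Proof.
  intros Hf eps Heps. destruct (Hf t (eps/2) ltac:(lra)) as [d [Hd Hdd]].
  exists (mkposreal d Hd). intros h Hh0 Hh. simpl in Hh.
  assert (E : Rint f 0 (t + h) - Rint f 0 t = Rint (fun x => f x - f t) t (t + h) + f t * h).
  { rewrite <- (Rint_chasles f Hf 0 t (t + h)), Rint_minus, Rint_const by auto using continuity_cst.
    ring. }
  rewrite E. replace ((Rint (fun x => f x - f t) t (t + h) + f t * h) / h - f t)
    with (Rint (fun x => f x - f t) t (t + h) / h) by (field; auto).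
  unfold Rdiv. rewrite Rabs_mult, Rabs_inv.
  assert (B : Rabs (Rint (fun x => f x - f t) t (t + h)) <= eps/2 * Rabs (t + h - t)).
  { apply Rint_abs_le_unordered; [apply continuity_minus; auto using continuity_cst|].
    intros x Hx. destruct (Req_dec x t) as [->|Hne]; [rewrite Rminus_diag, Rabs_R0; lra|].
    left. apply Hdd. split; [split; [exact I|auto]|]. simpl; unfold Rdist.
    unfold Rmin, Rmax in Hx; destruct (Rle_dec t (t + h)); apply Rabs_def1; apply Rabs_def2 in Hh; lra. }
  replace (t + h - t) with h in B by ring.
  assert (Hh1 : 0 < Rabs h) by (apply Rabs_pos_lt; auto).
  apply Rle_lt_trans with (eps/2 * Rabs h * / Rabs h).
  - apply Rmult_le_compat_r; auto. left; apply Rinv_0_lt_compat; auto.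
  - field_simplify; lra.
Qed.

Lemma Rint_primitive f F a b : a <= b -> continuity f ->
  (forall x, a <= x <= b -> derivable_pt_lim F x (f x)) -> Rint f a b = F b - F a.
Proof.
  intros Hab Hf HF. assert (Hch := Rint_chasles f Hf 0 a b).
  enough (F b - Rint f 0 b = F a - Rint f 0 a) by lra.
  destruct (Req_dec a b) as [<-|Hne]; [reflexivity|].
  destruct (MVT_cor2 (fun s => F s - Rint f 0 s) (fun _ => 0) a b ltac:(lra)) as [c [Hc _]]; [|lra].
  intros x Hx.
  assert (H := derivable_pt_lim_minus _ _ x _ _ (HF x Hx) (derivable_pt_lim_Rint f x Hf)).
  rewrite Rminus_diag in H. exact H.
Qed.

(** * Periodic functions *)

Lemma periodic_Z (f : R -> R) : (forall x, f (x + 1) = f x) -> forall x k, f (x + IZR k) = f x.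
Proof.
  intros H x k.
  assert (Hn : forall n x, f (x + INR n) = f x).
  { induction n as [|n IH]; intros y; [rewrite Rplus_0_r; auto|].
    rewrite S_INR, <- Rplus_assoc, H; auto. }
  destruct k as [|p|p].
  - rewrite Rplus_0_r; auto.
  - rewrite <- positive_nat_Z, <- INR_IZR_INZ. apply Hn.
  - rewrite <- Pos2Z.opp_pos, opp_IZR, <- positive_nat_Z, <- INR_IZR_INZ.
    rewrite <- (Hn (Pos.to_nat p) (x + - INR (Pos.to_nat p))). f_equal; ring.
Qed.

Lemma exists_frac_part x : exists k : Z, 0 <= x - IZR k < 1.
Proof. exists (Int_part x). destruct (base_Int_part x); lra. Qed.

Lemma periodic_bounded g : continuity g -> (forall x, g (x + 1) = g x) ->
  exists M, 0 <= M /\ forall x, Rabs (g x) <= M.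
Proof.
  intros Hc Hp. destruct (continuity_ab_maj (fun x => Rabs (g x)) 0 1) as [m [Hm _]]; [lra| |].
  { intros c _. apply (continuity_pt_comp g Rabs); [apply Hc|apply Rcontinuity_abs]. }
  exists (Rabs (g m)). split; [apply Rabs_pos|]. intros x. destruct (exists_frac_part x) as [k Hk].
  replace x with ((x - IZR k) + IZR k) by ring. rewrite (periodic_Z g Hp). apply Hm. lra.
Qed.

Section Periodic_integral.
Variable g : R -> R.
Hypotheses (Hc : continuity g) (Hp : forall x, g (x + 1) = g x).

Lemma Rint_period_step c : Rint g 0 (c + 1) = Rint g 0 c + Rint g 0 1.
Proof.
  assert (E := null_derivative_eq (fun t => Rint g 0 (t + 1) - Rint g 0 t) 0 c).
  cbv beta in E. rewrite Rplus_0_l, Rint_same in E by auto.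
  enough (Rint g 0 (c + 1) - Rint g 0 c = Rint g 0 1) by lra. rewrite E; [ring|].
  intros x.
  assert (H := derivable_pt_lim_minus _ _ x _ _
                 (derivable_pt_lim_shift _ 1 x _ (derivable_pt_lim_Rint g (x + 1) Hc))
                 (derivable_pt_lim_Rint g x Hc)).
  rewrite Hp, Rminus_diag in H. exact H.
Qed.

Lemma Rint_periodic_shift c : Rint (fun x => g (x + c)) 0 1 = Rint g 0 1.
Proof.
  rewrite (Rint_primitive (fun x => g (x + c)) (fun x => Rint g 0 (x + c))); [| lra |
    apply continuity_shift; auto | intros x _; apply derivable_pt_lim_shift, derivable_pt_lim_Rint;
      auto].
  rewrite Rplus_0_l, (Rplus_comm 1), Rint_period_step. ring.
Qed.

Lemma Rint_mean_zero_bounded B : Rint g 0 1 = 0 -> (forall t, Rabs (g t) <= B) ->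
  forall t, Rabs (Rint g 0 t) <= B.
Proof.
  intros H0 HB t. destruct (exists_frac_part t) as [k Hk].
  assert (E : Rint g 0 ((t - IZR k) + IZR k) = Rint g 0 (t - IZR k)).
  { apply (periodic_Z (fun s => Rint g 0 s)). intros s. rewrite Rint_period_step, H0. ring. }
  replace (t - IZR k + IZR k) with t in E by ring. rewrite E.
  eapply Rle_trans; [apply Rint_abs_le_unordered with (B := B); auto|].
  rewrite Rminus_0_r, Rabs_pos_eq by lra.
  assert (0 <= B) by (apply Rle_trans with (Rabs (g 0)); [apply Rabs_pos|auto]). nra.
Qed.

End Periodic_integral.

(* A Lebesgue-number argument on [0, 1]. *)
Lemma uniform_radius_01 (Q : R -> R -> Prop) :
  (forall y s s', Q y s -> 0 < s' <= s -> Q y s') ->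
  (forall x, 0 <= x <= 1 -> exists d, 0 < d /\ forall y, Rabs (y - x) < d -> Q y d) ->
  exists s, 0 < s /\ forall y, 0 <= y <= 1 -> Q y s.
Proof.
  intros Hmono Hloc.
  set (E := fun b => 0 <= b <= 1 /\ exists s, 0 < s /\ forall y, 0 <= y <= b -> Q y s).
  assert (HE0 : E 0).
  { destruct (Hloc 0 ltac:(lra)) as [d [Hd Hdd]]. split; [lra|]. exists d; split; auto.
    intros y Hy. apply Hdd. replace (y - 0) with 0 by lra. rewrite Rabs_R0; auto. }
  destruct (completeness E) as [c [Hc1 Hc2]]; [exists 1; intros x [Hx _]; lra | exists 0; auto |].
  assert (c0 : 0 <= c) by (apply Hc1; auto).
  assert (c1 : c <= 1) by (apply Hc2; intros x [Hx _]; lra).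
  destruct (Hloc c ltac:(lra)) as [d [Hd Hdd]].
  assert (exists b, E b /\ c - d < b) as [b [[Hb01 [sb [Hsb Hsbb]]] Hbc]].
  { apply NNPP; intro N. assert (c <= c - d); [|lra].
    apply Hc2. intros x Hx. apply Rnot_lt_le. intro. apply N. exists x; auto. }
  set (c' := Rmin 1 (c + d/2)).
  assert (Ec' : E c').
  { split; [unfold c', Rmin; destruct (Rle_dec 1 (c + d/2)); lra|].
    exists (Rmin sb d). split; [apply Rmin_glb_lt; auto|].
    intros y Hy. destruct (Rle_dec y b).
    - apply Hmono with sb; [apply Hsbb; lra|split; [apply Rmin_glb_lt; auto|apply Rmin_l]].
    - apply Hmono with d; [|split; [apply Rmin_glb_lt; auto|apply Rmin_r]].
      apply Hdd. apply Rabs_def1; unfold c', Rmin in Hy; destruct (Rle_dec 1 (c + d/2)); lra. }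
  assert (c' <= c) by (apply Hc1; auto).
  assert (c' = 1) by (unfold c', Rmin in *; destruct (Rle_dec 1 (c + d / 2)); lra).
  destruct Ec' as [_ [s [Hs Hss]]]. exists s; split; auto. intros y Hy. apply Hss. lra.
Qed.

(** * Continuous functions on the torus *)

Section Torus_function.
Variable phi : R -> R -> R.
Hypothesis Hphi : cont_T2 phi.

Lemma cont_T2_reduce x y k l : phi (x - IZR k) (y - IZR l) = phi x y.
Proof.
  destruct Hphi as [Hper _].
  rewrite <- (periodic_Z (fun t => phi t (y - IZR l)) (fun t => proj1 (Hper t _)) (x - IZR k) k).
  replace (x - IZR k + IZR k) with x by ring.
  rewrite <- (periodic_Z (phi x) (fun t => proj2 (Hper x t)) (y - IZR l) l). f_equal; ring.
Qed.

Lemma cont_T2_fibre : forall x, continuity (phi x).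
Proof.
  intros x y e He. destruct (proj2 Hphi x y e He) as [d [Hd Hdd]]. exists d; split; auto.
  intros y' [_ Hy']. simpl in *. unfold Rdist in *. apply Hdd; auto. rewrite Rminus_diag, Rabs_R0; auto.
Qed.

Lemma cont_T2_comp u v : continuity u -> continuity v -> continuity (fun x => phi (u x) (v x)).
Proof.
  intros Hu Hv x e He. destruct (proj2 Hphi (u x) (v x) e He) as [d [Hd Hdd]].
  destruct (Hu x d Hd) as [d1 [Hd1 Hdd1]]. destruct (Hv x d Hd) as [d2 [Hd2 Hdd2]].
  exists (Rmin d1 d2). split; [apply Rmin_glb_lt; auto|].
  intros x' [Hx'1 Hx'2]. simpl in *. unfold Rdist in *.
  destruct (Req_dec x' x) as [->|Hne]; [rewrite Rminus_diag, Rabs_R0; auto|].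
  apply Hdd.
  - apply Hdd1. split; [exact Hx'1|]. eapply Rlt_le_trans; [apply Hx'2|apply Rmin_l].
  - apply Hdd2. split; [exact Hx'1|]. eapply Rlt_le_trans; [apply Hx'2|apply Rmin_r].
Qed.

(* Uniform continuity in [x], uniformly in [y]: first a radius at a fixed [x0] valid for all
   [y] in a period, then a radius valid for all [x] in a period. *)
Lemma cont_T2_unif_x eps : 0 < eps -> exists rho, 0 < rho /\
  forall x x' y, Rabs (x' - x) < rho -> Rabs (phi x' y - phi x y) < eps.
Proof.
  intros Heps.
  assert (Hfix : forall x0, exists s, 0 < s /\ forall y x', 0 <= y <= 1 -> Rabs (x' - x0) < s ->
     Rabs (phi x' y - phi x0 y) < eps / 2).
  { intros x0.
    destruct (uniform_radius_01
      (fun y s => forall x', Rabs (x' - x0) < s -> Rabs (phi x' y - phi x0 y) < eps / 2))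
      as [s [Hs Hss]]; [intros y s s' H1 H2 x' Hx'; apply H1; lra| |exists s; auto].
    intros y0 _. destruct (proj2 Hphi x0 y0 (eps/4) ltac:(lra)) as [d [Hd Hdd]].
    exists d; split; auto. intros y Hy x' Hx'.
    assert (A1 := Hdd x' y Hx' Hy). assert (A2 := Hdd x0 y ltac:(rewrite Rminus_diag, Rabs_R0; auto) Hy).
    replace (phi x' y - phi x0 y) with ((phi x' y - phi x0 y0) - (phi x0 y - phi x0 y0)) by ring.
    eapply Rle_lt_trans; [apply Rabs_triang|]. rewrite Rabs_Ropp. lra. }
  destruct (uniform_radius_01 (fun x s => forall x' y, 0 <= y <= 1 -> Rabs (x' - x) < s ->
              Rabs (phi x' y - phi x y) < eps)) as [s [Hs Hss]].
  - intros y s s' H1 H2 x' z Hz Hx'. apply H1; auto; lra.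
  - intros x0 _. destruct (Hfix x0) as [s [Hs Hss]]. exists (s/2); split; [lra|].
    intros x Hx x' y Hy Hx'. apply Rabs_def2 in Hx. apply Rabs_def2 in Hx'.
    assert (A1 := Hss y x' Hy ltac:(apply Rabs_def1; lra)).
    assert (A2 := Hss y x Hy ltac:(apply Rabs_def1; lra)).
    replace (phi x' y - phi x y) with ((phi x' y - phi x0 y) - (phi x y - phi x0 y)) by ring.
    eapply Rle_lt_trans; [apply Rabs_triang|]. rewrite Rabs_Ropp. lra.
  - exists s; split; auto. intros x x' y Hxx'.
    destruct (exists_frac_part x) as [k Hk]. destruct (exists_frac_part y) as [l Hl].
    rewrite <- (cont_T2_reduce x y k l), <- (cont_T2_reduce x' y k l).
    apply Hss; [lra|lra|]. replace (x' - IZR k - (x - IZR k)) with (x' - x) by ring; auto.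
Qed.

Lemma cont_T2_bounded : exists M, 0 <= M /\ forall x y, Rabs (phi x y) <= M.
Proof.
  destruct (cont_T2_unif_x 1 ltac:(lra)) as [rho [Hrho Hrr]].
  destruct (uniform_radius_01 (fun x s => forall x' y, Rabs (x' - x) < s -> Rabs (phi x' y) <= / s))
    as [s [Hs Hss]].
  - intros x s s' H1 H2 x' y Hx'.
    apply Rle_trans with (/ s); [apply H1; lra|apply Rinv_le_contravar; lra].
  - intros x0 _. destruct (periodic_bounded (phi x0) (cont_T2_fibre x0)) as [M0 [HM0 HM0b]];
      [intros y; apply (proj1 Hphi)|].
    set (d := Rmin (rho/2) (/ (M0 + 1))).
    assert (Hd1 : d <= rho/2) by apply Rmin_l. assert (Hd2 : d <= / (M0 + 1)) by apply Rmin_r.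
    assert (Hd0 : 0 < d) by (apply Rmin_glb_lt; [lra|]; apply Rinv_0_lt_compat; lra).
    exists d. split; auto. intros x Hx x' y Hx'. apply Rabs_def2 in Hx. apply Rabs_def2 in Hx'.
    apply Rle_trans with (M0 + 1).
    + assert (A := Hrr x0 x' y ltac:(apply Rabs_def1; lra)). specialize (HM0b y).
      replace (phi x' y) with ((phi x' y - phi x0 y) + phi x0 y) by ring.
      eapply Rle_trans; [apply Rabs_triang|]. lra.
    + rewrite <- (Rinv_inv (M0 + 1)). apply Rinv_le_contravar; auto.
  - exists (/ s). split; [left; apply Rinv_0_lt_compat; auto|].
    intros x y. destruct (exists_frac_part x) as [k Hk]. rewrite <- (cont_T2_reduce x y k 0).
    rewrite Rminus_0_r. apply (Hss (x - IZR k)); [lra|]. rewrite Rminus_diag, Rabs_R0; auto.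
Qed.

Definition fibre_mean (t : R) := Rint (fun y => phi t y) 0 1.

Lemma fibre_mean_continuity : continuity fibre_mean.
Proof.
  intros x e He. destruct (cont_T2_unif_x (e/2) ltac:(lra)) as [rho [Hrho Hrr]].
  exists rho. split; auto. intros x' [_ Hx']. simpl in *. unfold Rdist in *.
  unfold fibre_mean. rewrite <- Rint_minus by apply cont_T2_fibre.
  eapply Rle_lt_trans; [apply Rint_abs_le with (B := e/2)|]; [lra| |intros; left; apply Hrr; auto|lra].
  apply continuity_minus; apply cont_T2_fibre.
Qed.

Lemma fibre_mean_periodic t : fibre_mean (t + 1) = fibre_mean t.
Proof. unfold fibre_mean. f_equal. apply functional_extensionality. intros y. apply (proj1 Hphi). Qed.

Lemma fibre_mean_abs_le M : (forall x y, Rabs (phi x y) <= M) -> forall t, Rabs (fibre_mean t) <= M.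
Proof.
  intros HM t. replace M with (M * (1 - 0)) by ring.
  apply Rint_abs_le; auto using cont_T2_fibre; lra.
Qed.

Definition fibre_centered (t y : R) := phi t y - fibre_mean t.

Lemma fibre_centered_continuity t : continuity (fibre_centered t).
Proof. apply continuity_minus; [apply cont_T2_fibre|apply continuity_cst]. Qed.

Lemma fibre_centered_periodic t y : fibre_centered t (y + 1) = fibre_centered t y.
Proof. unfold fibre_centered. rewrite (proj2 (proj1 Hphi t y)). reflexivity. Qed.

Lemma fibre_centered_mean_zero t : Rint (fibre_centered t) 0 1 = 0.
Proof.
  unfold fibre_centered. rewrite Rint_minus, Rint_const by auto using cont_T2_fibre, continuity_cst.
  unfold fibre_mean. change (fun y => phi t y) with (phi t). ring.
Qed.

Lemma fibre_centered_abs_le M : (forall x y, Rabs (phi x y) <= M) -> forall t y,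
  Rabs (fibre_centered t y) <= 2 * M.
Proof.
  intros HM t y. unfold fibre_centered. eapply Rle_trans; [apply Rabs_triang|]. rewrite Rabs_Ropp.
  assert (H1 := fibre_mean_abs_le M HM t). assert (H2 := HM t y). lra.
Qed.

Lemma fibre_centered_close t t' e : (forall y, Rabs (phi t y - phi t' y) <= e) ->
  forall y, Rabs (fibre_centered t y - fibre_centered t' y) <= 2 * e.
Proof.
  intros He y. unfold fibre_centered.
  replace (phi t y - fibre_mean t - (phi t' y - fibre_mean t'))
    with ((phi t y - phi t' y) - (fibre_mean t - fibre_mean t')) by ring.
  eapply Rle_trans; [apply Rabs_triang|]. rewrite Rabs_Ropp.
  assert (Rabs (fibre_mean t - fibre_mean t') <= e).
  { unfold fibre_mean. rewrite <- Rint_minus by apply cont_T2_fibre.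
    replace e with (e * (1 - 0)) by ring.
    apply Rint_abs_le; [lra|apply continuity_minus; apply cont_T2_fibre|intros; apply He]. }
  assert (Hy := He y). lra.
Qed.

End Torus_function.

(** * Power series and real-analytic functions *)

Definition binomial_term (d t : R) (n k : nat) : R :=
  if Nat.leb k n then C n k * t ^ k * d ^ (n - k) else 0.

Lemma binomial_term_zero d t n k : (n < k)%nat -> binomial_term d t n k = 0.
Proof. intros H. unfold binomial_term. destruct (Nat.leb_spec k n); [lia|auto]. Qed.

Lemma binomial_term_sum d t n : sum_f_R0 (binomial_term d t n) n = (d + t) ^ n.
Proof.
  rewrite Rplus_comm, binomial. apply sum_eq. intros i Hi.
  unfold binomial_term. destruct (Nat.leb_spec i n); [ring|lia].
Qed.

Lemma binomial_term_tail_bound d t rho n K : 0 < rho -> Rabs t <= rho ->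
  Rabs ((d + t) ^ n - sum_f_R0 (binomial_term d t n) K) <= (Rabs d + rho) ^ n * (Rabs t / rho) ^ S K.
Proof.
  intros Hrho Ht. set (q := Rabs t / rho).
  assert (Hq : 0 <= q <= 1) by (unfold q; split; [apply Rdiv_nonneg; auto; apply Rabs_pos|];
    apply Rmult_le_reg_r with rho; auto; unfold Rdiv; rewrite Rmult_assoc, Rinv_l; lra).
  assert (Hd : 0 <= Rabs d) by apply Rabs_pos.
  assert (Hrhs : 0 <= (Rabs d + rho) ^ n * q ^ S K) by (apply Rmult_le_pos; apply pow_le; lra).
  rewrite <- binomial_term_sum.
  destruct (le_lt_dec n K) as [HnK|HKn].
  - destruct (Nat.eq_dec n K) as [<-|Hne]; [rewrite Rminus_diag, Rabs_R0; auto|].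
    rewrite (tech2 _ n K) by lia.
    rewrite (sum_eq (fun i => binomial_term d t n (S n + i)) (fun _ => 0))
      by (intros; apply binomial_term_zero; lia).
    rewrite sum_cte. replace (sum_f_R0 (binomial_term d t n) n -
      (sum_f_R0 (binomial_term d t n) n + 0 * INR (S (K - S n)))) with 0 by ring.
    rewrite Rabs_R0; auto.
  - set (w := fun k => C n k * rho ^ k * Rabs d ^ (n - k)).
    assert (Hw : forall k, 0 <= w k).
    { intros k. unfold w. apply Rmult_le_pos; [apply Rmult_le_pos; [apply C_nonneg|]|];
      apply pow_le; lra. }
    assert (Hsum : sum_f_R0 w n = (Rabs d + rho) ^ n)
      by (unfold w; rewrite Rplus_comm, binomial; reflexivity).
    rewrite (tech2 _ K n), (Rplus_comm (sum_f_R0 _ K)) by lia. unfold Rminus.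
    rewrite Rplus_assoc, Rplus_opp_r, Rplus_0_r.
    eapply Rle_trans; [apply Rsum_abs|].
    apply Rle_trans with (q ^ S K * sum_f_R0 (fun i => w (S K + i)%nat) (n - S K)).
    + rewrite <- sum_f_R0_scal_l. apply sum_Rle. intros i Hi. unfold binomial_term, w.
      destruct (Nat.leb_spec (S K + i) n); [|lia].
      rewrite !Rabs_mult, <- !RPow_abs, (Rabs_pos_eq (C _ _)) by apply C_nonneg.
      replace (Rabs t ^ (S K + i)) with (q ^ (S K + i) * rho ^ (S K + i))
        by (unfold q, Rdiv; rewrite Rpow_mult_distr, pow_inv; field; apply pow_nonzero; lra).
      assert (q ^ (S K + i) <= q ^ S K) by (apply pow_decr; auto; lia).
      assert (0 <= C n (S K + i) * rho ^ (S K + i) * Rabs d ^ (n - (S K + i)))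
        by (apply Rmult_le_pos; [apply Rmult_le_pos; [apply C_nonneg|]|]; apply pow_le; lra).
      nra.
    + rewrite (Rmult_comm (_ ^ n)), <- Hsum, (tech2 w K n) by lia.
      apply Rmult_le_compat_l; [apply pow_le; lra|].
      assert (0 <= sum_f_R0 w K) by (apply cond_pos_sum; auto). lra.
Qed.

Definition power_series_at (f : R -> R) x0 r (a : nat -> R) :=
  forall x, Rabs (x - x0) < r -> Pser a (x - x0) (f x).

(* [series_sum] and [deriv] are chosen by [epsilon]; they are unspecified when the series
   diverges, resp. when [f] is not differentiable at [x]. *)
Definition series_sum (u : nat -> R) : R := epsilon (inhabits 0) (fun l => infinite_sum u l).

Lemma series_sum_eq u l : infinite_sum u l -> series_sum u = l.
Proof.
  intros H. unfold series_sum. apply (uniqueness_sum u).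
  apply (epsilon_spec (inhabits 0) (fun l => infinite_sum u l)).
  eauto. auto.
Qed.

Lemma series_sum_spec u : (exists l, infinite_sum u l) -> infinite_sum u (series_sum u).
Proof. intros [l H]. rewrite (series_sum_eq u l H); auto. Qed.

Definition deriv (f : R -> R) (x : R) : R := epsilon (inhabits 0) (fun l => derivable_pt_lim f x l).

Lemma deriv_eq f x l : derivable_pt_lim f x l -> deriv f x = l.
Proof.
  intros H. unfold deriv. apply (uniqueness_limite f x).
  apply (epsilon_spec (inhabits 0) (fun l => derivable_pt_lim f x l)).
  eauto. auto.
Qed.

Definition coef_bound (a : nat -> R) (B s : R) := forall n, Rabs (a n) * s ^ n <= B.

Lemma power_series_coef_bound f x0 r a s : power_series_at f x0 r a -> 0 <= s < r -> exists B,
  0 <= B /\ coef_bound a B s.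
Proof.
  intros H Hs. assert (Hp := H (x0 + s) ltac:(replace (x0 + s - x0) with s
    by ring; rewrite Rabs_pos_eq; lra)).
  unfold Pser in Hp. destruct (infinite_sum_terms_bounded _ _ Hp) as [B [HB HBB]]. exists B; split; auto.
  intros n. specialize (HBB n). rewrite Rabs_mult, <- RPow_abs in HBB.
  replace (x0 + s - x0) with s in HBB by ring. rewrite (Rabs_pos_eq s) in HBB by lra. auto.
Qed.

Lemma coef_bound_geometric a B s rho n : coef_bound a B s -> 0 <= rho -> 0 < s ->
  Rabs (a n) * rho ^ n <= B * (rho / s) ^ n.
Proof.
  intros H Hr Hs. unfold Rdiv. rewrite Rpow_mult_distr, pow_inv.
  specialize (H n). assert (0 < s ^ n) by (apply pow_lt; auto).
  apply Rmult_le_reg_r with (s ^ n); auto.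
  replace (B * (rho ^ n * / s ^ n) * s ^ n) with (B * rho ^ n) by (field; lra).
  replace (Rabs (a n) * rho ^ n * s ^ n) with ((Rabs (a n) * s ^ n) * rho ^ n) by ring.
  apply Rmult_le_compat_r; auto. apply pow_le; auto.
Qed.

Lemma coef_bound_abs_summable a B s rho : coef_bound a B s -> 0 <= rho < s ->
  exists A, infinite_sum (fun n => Rabs (a n) * rho ^ n) A.
Proof.
  intros H Hr.
  destruct (infinite_sum_comparison (fun n => Rabs (a n) * rho ^ n) (fun n => B * (rho / s) ^ n) (B
    / (1 - rho / s)))
    as [A [HA _]].
  - intros n. rewrite Rabs_pos_eq. apply coef_bound_geometric; auto; lra.
    apply Rmult_le_pos; [apply Rabs_pos|apply pow_le; lra].
  - apply infinite_sum_geometric. split. apply Rdiv_nonneg; lra. apply Rdiv_lt_1; lra.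
  - eauto.
Qed.

Lemma INR_pow_le_geometric (th : R) m : 0 <= th < 1 -> INR (S m) * th ^ m <= / (1 - th).
Proof.
  intros Hth. apply Rle_trans with (sum_f_R0 (fun k => th ^ k) m).
  - clear -Hth. induction m.
    + simpl; lra.
    + rewrite S_INR. simpl sum_f_R0. 
      assert (th ^ S m <= th ^ m) by (apply pow_decr; lra || lia).
      assert (INR (S m) * th ^ S m <= INR (S m) * th ^ m)
        by (apply Rmult_le_compat_l; [apply pos_INR|auto]).
      change (th ^ S m) with (th * th ^ m) in *. lra.
  - rewrite tech3 by lra. unfold Rdiv. rewrite Rmult_comm. rewrite <- (Rmult_1_r (/ (1 - th))) at 2.
    apply Rmult_le_compat_l. left; apply Rinv_0_lt_compat; lra.
    assert (0 <= th ^ S m) by (apply pow_le; lra). lra.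
Qed.

Lemma derivable_pt_lim_pow_shift x0 n y :
  derivable_pt_lim (fun t => (t - x0) ^ n) y (INR n * (y - x0) ^ pred n).
Proof.
  replace (INR n * (y - x0) ^ pred n) with ((INR n * (y - x0) ^ pred n) * (1 - 0)) by ring.
  apply (derivable_pt_lim_comp (fun t => t - x0) (fun t => t ^ n)).
  - apply derivable_pt_lim_minus; [apply derivable_pt_lim_id|apply derivable_pt_lim_const].
  - apply derivable_pt_lim_pow.
Qed.

Lemma derivable_pt_lim_power_partial_sum (a : nat -> R) x0 N y :
  derivable_pt_lim (fun t => sum_f_R0 (fun n => a n * (t - x0) ^ n) (S N)) y
    (sum_f_R0 (fun n => INR (S n) * a (S n) * (y - x0) ^ n) N).
Proof.
  induction N as [|N IH].
  - change (derivable_pt_lim (fun t => a 0%nat * (t - x0) ^ 0 + a 1%nat * (t - x0) ^ 1) y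
      (INR 1 * a 1%nat * (y - x0) ^ 0)).
    replace (INR 1 * a 1%nat * (y - x0) ^ 0)
      with (a 0%nat * (INR 0 * (y - x0) ^ pred 0) + a 1%nat * (INR 1 * (y - x0) ^ pred 1))
      by (simpl; ring).
    apply derivable_pt_lim_plus; apply derivable_pt_lim_scal, derivable_pt_lim_pow_shift.
  - change (derivable_pt_lim
      (fun t => sum_f_R0 (fun n => a n * (t - x0) ^ n) (S N) + a (S (S N)) * (t - x0) ^ S (S N)) y
      (sum_f_R0 (fun n => INR (S n) * a (S n) * (y - x0) ^ n) N +
       INR (S (S N)) * a (S (S N)) * (y - x0) ^ S N)).
    apply derivable_pt_lim_plus; auto.
    replace (INR (S (S N)) * a (S (S N)) * (y - x0) ^ S N)
      with (a (S (S N)) * (INR (S (S N)) * (y - x0) ^ pred (S (S N)))) by (simpl pred; ring).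
    apply derivable_pt_lim_scal, derivable_pt_lim_pow_shift.
Qed.

Lemma coef_bound_deriv a B rho rho1 rho2 : coef_bound a B rho2 -> 0 <= rho < rho1 -> rho1 < rho2 ->
  forall m, Rabs (INR (S m) * a (S m)) * rho ^ m <=
     (/ (1 - rho/rho1)) * (B / rho1) * (rho1 / rho2) ^ S m.
Proof.
  intros Hcb Hr Hr12 m.
  assert (Hth : 0 <= rho / rho1 < 1) by (split; [apply Rdiv_nonneg|apply Rdiv_lt_1]; lra).
  assert (Hn := INR_pow_le_geometric (rho/rho1) m Hth).
  assert (Hc := coef_bound_geometric a B rho2 rho1 (S m) Hcb ltac:(lra) ltac:(lra)).
  rewrite Rabs_mult, (Rabs_pos_eq (INR (S m))) by apply pos_INR.
  replace (INR (S m) * Rabs (a (S m)) * rho ^ m) with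
    ((INR (S m) * (rho/rho1) ^ m) * (Rabs (a (S m)) * rho1 ^ S m / rho1)).
  2:{ unfold Rdiv. rewrite Rpow_mult_distr, pow_inv. simpl. field. split; [lra|].
      apply pow_nonzero; lra. }
  replace (/ (1 - rho / rho1) * (B / rho1) * (rho1 / rho2) ^ S m) with
    (/ (1 - rho / rho1) * (B * (rho1 / rho2) ^ S m / rho1)) by (unfold Rdiv; ring).
  apply Rmult_le_compat; auto.
  - apply Rmult_le_pos; [apply pos_INR|apply pow_le; lra].
  - apply Rdiv_nonneg; [|lra]. apply Rmult_le_pos; [apply Rabs_pos|apply pow_le; lra].
  - unfold Rdiv at 1 3. apply Rmult_le_compat_r; [left; apply Rinv_0_lt_compat; lra| auto].
Qed.

Lemma power_series_deriv_majorant f x0 r a rho : power_series_at f x0 r a -> 0 <= rho < r ->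
  exists K th, 0 <= th < 1 /\ forall m y, Rabs (y - x0) <= rho ->
    Rabs (INR (S m) * a (S m) * (y - x0) ^ m) <= K * th ^ S m.
Proof.
  intros Hps Hrho. set (rho1 := (rho + r) / 2). set (rho2 := (rho1 + r) / 2).
  destruct (power_series_coef_bound f x0 r a rho2 Hps ltac:(unfold rho2, rho1; lra)) as [B [HB Hcb]].
  exists (/ (1 - rho / rho1) * (B / rho1)), (rho1 / rho2).
  split; [split; [apply Rdiv_nonneg|apply Rdiv_lt_1]; unfold rho2, rho1; lra|].
  intros m y Hy. rewrite Rabs_mult, <- RPow_abs.
  eapply Rle_trans; [|apply (coef_bound_deriv a B); auto; unfold rho2, rho1; lra].
  apply Rmult_le_compat_l; [apply Rabs_pos|]. apply pow_incr; split; auto; apply Rabs_pos.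
Qed.

Lemma power_series_derivable f x0 r a : power_series_at f x0 r a -> forall x, Rabs (x - x0) < r ->
  infinite_sum (fun n => INR (S n) * a (S n) * (x - x0) ^ n)
               (series_sum (fun n => INR (S n) * a (S n) * (x - x0) ^ n)) /\
  derivable_pt_lim f x (series_sum (fun n => INR (S n) * a (S n) * (x - x0) ^ n)).
Proof.
  intros Hps x Hx. set (rho := (Rabs (x - x0) + r) / 2).
  assert (Hr0 : 0 <= Rabs (x - x0)) by apply Rabs_pos.
  assert (Hrho : 0 < rho) by (unfold rho; lra).
  destruct (power_series_deriv_majorant f x0 r a rho Hps ltac:(unfold rho; lra)) as [K [th [Hth Hmaj]]].
  set (b := fun n => INR (S n) * a (S n)).
  assert (Hv : infinite_sum (fun m => K * th ^ S m) (K * th / (1 - th))).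
  { apply (infinite_sum_ext (fun m => (K * th) * th ^ m)); [intros; simpl; ring|].
    apply infinite_sum_geometric; auto. }
  assert (Hconv : forall y, Rabs (y - x0) <= rho ->
            infinite_sum (fun n => b n * (y - x0) ^ n) (series_sum (fun n => b n * (y - x0) ^ n))).
  { intros y Hy. apply series_sum_spec. eapply infinite_sum_dominated; [|apply Hv].
    intros; apply Hmaj; auto. }
  split; [apply Hconv; unfold rho; lra|].
  apply (CVU_derivable (fun N y => sum_f_R0 (fun n => a n * (y - x0) ^ n) (S N))
           (fun N y => sum_f_R0 (fun n => b n * (y - x0) ^ n) N) f
           (fun y => series_sum (fun n => b n * (y - x0) ^ n)) x0 (mkposreal rho Hrho)).
  - intros e He. destruct (Hv e He) as [N HN]. exists N. intros n y Hn Hy.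
    unfold Boule in Hy; simpl in Hy.
    eapply Rle_lt_trans.
    + apply (infinite_sum_tail_bound _ (fun m => K * th ^ S m) _ (K * th / (1 - th)) n);
        [intros m; apply Hmaj; lra|apply Hconv; lra|apply Hv].
    + specialize (HN n Hn). unfold Rdist in HN. apply Rabs_def2 in HN. lra.
  - intros y Hy. unfold Boule in Hy; simpl in Hy. assert (Hp := Hps y ltac:(unfold rho in Hy; lra)).
    intros e He. destruct (Hp e He) as [N HN]. exists N. intros n Hn. apply HN; lia.
  - intros N y _. apply derivable_pt_lim_power_partial_sum.
  - unfold Boule; simpl. unfold rho; lra.
Qed.

Lemma power_series_at_deriv f x0 r a : power_series_at f x0 r a ->
  power_series_at (deriv f) x0 r (fun n => INR (S n) * a (S n)).
Proof.
  intros H x Hx. destruct (power_series_derivable f x0 r a H x Hx) as [H1 H2].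
  rewrite (deriv_eq f x _ H2).
  unfold Pser. apply infinite_sum_ext with (2 := H1). intros; ring.
Qed.

Lemma real_analytic_derivable f : real_analytic f -> forall x, derivable_pt_lim f x (deriv f x).
Proof.
  intros H x. destruct (H x) as [r [Hr [a Ha]]].
  destruct (power_series_derivable f x r a Ha x ltac:(rewrite Rminus_diag, Rabs_R0; auto)) as [_ Hd].
  rewrite (deriv_eq f x _ Hd). auto.
Qed.

Lemma real_analytic_deriv f : real_analytic f -> real_analytic (deriv f).
Proof.
  intros H x0. destruct (H x0) as [r [Hr [a Ha]]]. exists r; split; auto.
  exists (fun n => INR (S n) * a (S n)). apply (power_series_at_deriv f x0 r a Ha).
Qed.

Lemma real_analytic_continuity f : real_analytic f -> continuity f.
Proof.
  intros H x. apply derivable_continuous_pt. exists (deriv f x). apply real_analytic_derivable; auto.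
Qed.

Lemma real_analytic_plus_scal f g c : real_analytic f -> real_analytic g ->
  real_analytic (fun x => f x + c * g x).
Proof.
  intros Hf Hg x0. destruct (Hf x0) as [r [Hr [a Ha]]]. destruct (Hg x0) as [r' [Hr' [a' Ha']]].
  exists (Rmin r r'). split. apply Rmin_glb_lt; auto.
  exists (fun n => a n + c * a' n). intros x Hx.
  assert (H1 := Ha x ltac:(eapply Rlt_le_trans; [apply Hx| apply Rmin_l])).
  assert (H2 := Ha' x ltac:(eapply Rlt_le_trans; [apply Hx| apply Rmin_r])).
  unfold Pser in *.
  apply (infinite_sum_ext (fun n => a n * (x - x0) ^ n + c * (a' n * (x - x0) ^ n))); [intros; ring|].
  apply infinite_sum_plus, infinite_sum_scal; auto.
Qed.

(* Taylor coefficients at [x0 + d] of the power series [a] centred at [x0]. *)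
Definition recentered_coef (a : nat -> R) (d : R) (k : nat) : R :=
  series_sum (fun m => a (m + k)%nat * C (m + k) k * d ^ m).

Lemma recentered_coef_spec a Rr A d k : 0 < Rr -> Rabs d < Rr / 2 ->
  infinite_sum (fun n => Rabs (a n) * Rr ^ n) A ->
  infinite_sum (fun m => a (m + k)%nat * C (m + k) k * d ^ m) (recentered_coef a d k) /\
  Rabs (recentered_coef a d k) * (Rr / 2) ^ k <= A.
Proof.
  intros HRr Hd HA. assert (Hp : 0 < (Rr / 2) ^ k) by (apply pow_lt; lra).
  destruct (infinite_sum_tail _ _ k HA) as [Uk [HUk HUkA]].
  assert (HUkA' : Uk <= A)
    by (apply HUkA; intros; apply Rmult_le_pos; [apply Rabs_pos|apply pow_le; lra]).
  destruct (infinite_sum_comparison (fun m => a (m + k)%nat * C (m + k) k * d ^ m)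
              (fun m => / (Rr / 2) ^ k * (Rabs (a (m + k)%nat) * Rr ^ (m + k))) (/ (Rr / 2) ^ k * Uk))
    as [l [Hl1 Hl2]]; [|apply infinite_sum_scal; auto|].
  - intros m. rewrite !Rabs_mult, <- RPow_abs, (Rabs_pos_eq (C _ _)) by apply C_nonneg.
    assert (Hbin : C (m + k) k * (Rr / 2) ^ k * Rabs d ^ m <= Rr ^ (m + k)).
    { assert (H := binomial_term_le (Rr / 2) (Rabs d) (m + k) k ltac:(lra) (Rabs_pos d) ltac:(lia)).
      rewrite Nat.add_sub in H. eapply Rle_trans; [apply H|]. apply pow_incr.
      assert (0 <= Rabs d) by apply Rabs_pos. lra. }
    replace (Rabs (a (m + k)%nat) * C (m + k) k * Rabs d ^ m)
      with (/ (Rr / 2) ^ k * (Rabs (a (m + k)%nat) * (C (m + k) k * (Rr / 2) ^ k * Rabs d ^ m)))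
      by (field; lra).
    apply Rmult_le_compat_l; [left; apply Rinv_0_lt_compat; auto|].
    apply Rmult_le_compat_l; [apply Rabs_pos|auto].
  - unfold recentered_coef. rewrite (series_sum_eq _ _ Hl1). split; auto.
    apply Rmult_le_reg_r with (/ (Rr / 2) ^ k); [apply Rinv_0_lt_compat; auto|].
    rewrite Rmult_assoc, Rinv_r, Rmult_1_r by lra. rewrite Rmult_comm.
    apply Rle_trans with (/ (Rr / 2) ^ k * Uk); auto.
    apply Rmult_le_compat_l; [left; apply Rinv_0_lt_compat|]; auto.
Qed.

Lemma power_series_recenter f x0 r a Rr : power_series_at f x0 r a -> 0 < Rr < r ->
  exists A, 0 <= A /\ forall y, Rabs (y - x0) < Rr / 2 ->
    power_series_at f y (Rr / 2) (recentered_coef a (y - x0)) /\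
    coef_bound (recentered_coef a (y - x0)) A (Rr / 2).
Proof.
  intros Hps HR.
  destruct (power_series_coef_bound f x0 r a ((Rr + r) / 2) Hps ltac:(lra)) as [B [HB Hcb]].
  destruct (coef_bound_abs_summable a B ((Rr + r) / 2) Rr Hcb ltac:(lra)) as [A HA].
  exists A. split; [apply infinite_sum_nonneg with (2 := HA); intros; apply Rmult_le_pos;
    [apply Rabs_pos|apply pow_le; lra]|].
  intros y Hy. set (d := y - x0). fold d in Hy.
  assert (Hc := fun k => recentered_coef_spec a Rr A d k ltac:(lra) Hy HA).
  split; [|intros k; apply (proj2 (Hc k))].
  intros x Hx. set (t := x - y).
  assert (Hxt : x - x0 = d + t) by (unfold d, t; ring).
  set (rho := (Rabs t + Rr / 2) / 2).
  assert (Ht0 : 0 <= Rabs t) by apply Rabs_pos. assert (Hd0 : 0 <= Rabs d) by apply Rabs_pos.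
  assert (Hrho1 : Rabs t < rho) by (unfold rho, t; lra).
  assert (Hrho2 : Rabs d + rho < Rr) by (unfold rho, t, d in *; lra).
  destruct (coef_bound_abs_summable a B ((Rr + r) / 2) (Rabs d + rho) Hcb ltac:(lra)) as [U HU].
  apply (infinite_sum_interchange (fun n k => a n * binomial_term d t n k) (fun n => a n * (x - x0) ^ n)
           _ (f x) (fun n => Rabs (a n) * (Rabs d + rho) ^ n) U (fun K => (Rabs t / rho) ^ S K)).
  - intros n. rewrite Hxt, <- binomial_term_sum, <- sum_f_R0_scal_l.
    apply infinite_sum_finite. intros k Hk. rewrite binomial_term_zero; auto; ring.
  - apply Hps. rewrite Hxt. eapply Rle_lt_trans; [apply Rabs_triang|]. lra.
  - intros k. apply infinite_sum_leading_zeros with k; [intros n Hn; rewrite binomial_term_zero;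
    auto; ring|].
    apply (infinite_sum_ext (fun m => t ^ k * (a (m + k)%nat * C (m + k) k * d ^ m))).
    + intros m. unfold binomial_term. destruct (Nat.leb_spec k (m + k)); [|lia].
      rewrite Nat.add_sub. ring.
    + rewrite Rmult_comm. apply infinite_sum_scal, Hc.
  - intros; apply Rmult_le_pos; [apply Rabs_pos|apply pow_le; lra].
  - auto.
  - apply pow_Un_cv_0. split; [apply Rdiv_nonneg|apply Rdiv_lt_1]; lra.
  - intros n K. rewrite Hxt, sum_f_R0_scal_l, <- Rmult_minus_distr_l, Rabs_mult, Rmult_assoc.
    apply Rmult_le_compat_l; [apply Rabs_pos|]. apply binomial_term_tail_bound; lra.
Qed.

Definition uniformly_analytic f s Cc := forall y, exists c, power_series_at f y s c /\ coef_bound c Cc s.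

Lemma power_series_at_shrink f y s s' c : power_series_at f y s c -> s' <= s -> power_series_at f y s' c.
Proof. intros H Hs x Hx. apply H. lra. Qed.

(* Bounding the coefficients by [/ s] at radius [s] ties both parameters to one number, so that
   the property is inherited by smaller radii and [uniform_radius_01] applies. *)
Lemma periodic_uniformly_analytic f : real_analytic f -> (forall x, f (x + 1) = f x) ->
  exists s Cc, 0 < s /\ 0 <= Cc /\ uniformly_analytic f s Cc.
Proof.
  intros Hf Hper.
  destruct (uniform_radius_01 (fun y s => exists c,
    power_series_at f y s c /\ coef_bound c (/ s) s)) as [s [Hs Hss]].
  - intros y s s' [c [H1 H2]] Hs'. exists c. split. apply power_series_at_shrink with s; auto; lra.
    intros n. specialize (H2 n). apply Rle_trans with (Rabs (c n) * s ^ n).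
    apply Rmult_le_compat_l; [apply Rabs_pos|apply pow_incr; lra].
    apply Rle_trans with (/ s); auto. apply Rinv_le_contravar; lra.
  - intros x _. destruct (Hf x) as [r [Hr [a Ha]]].
    destruct (power_series_recenter f x r a (r/2) Ha ltac:(lra)) as [A [HA HAA]].
    exists (Rmin (r/2/2) (/ (A + 1))). split. apply Rmin_glb_lt; [lra|apply Rinv_0_lt_compat; lra].
    intros y Hy. destruct (HAA y ltac:(eapply Rlt_le_trans; [apply Hy|apply Rmin_l])) as [H1 H2].
    set (c := recentered_coef a (y - x)) in *.
    set (dd := Rmin (r / 2 / 2) (/ (A + 1))) in *.
    assert (Hd1 : dd <= r/2/2) by apply Rmin_l. assert (Hd2 : dd <= / (A+1)) by apply Rmin_r.
    assert (Hd0 : 0 < dd) by (apply Rmin_glb_lt; [lra|apply Rinv_0_lt_compat; lra]).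
    exists c. split. apply power_series_at_shrink with (r/2/2); auto.
    intros n. apply Rle_trans with (Rabs (c n) * (r/2/2) ^ n).
    apply Rmult_le_compat_l; [apply Rabs_pos|apply pow_incr; lra].
    apply Rle_trans with A; auto. apply Rle_trans with (A + 1); [lra|].
    replace (A + 1) with (/ / (A + 1)) by (field; lra). apply Rinv_le_contravar; auto.
  - exists s, (/ s). split; auto. split. left; apply Rinv_0_lt_compat; auto.
    intros y. destruct (exists_frac_part y) as [k Hk].
    destruct (Hss (y - IZR k) ltac:(lra)) as [c [H1 H2]].
    exists c. split; auto. intros x Hx.
    replace (x - y) with ((x - IZR k) - (y - IZR k)) by ring.
    replace (f x) with (f (x - IZR k)).
    apply H1. replace (x - IZR k - (y - IZR k)) with (x - y) by ring; auto.
    rewrite <- (periodic_Z f Hper (x - IZR k) k). f_equal; ring.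
Qed.

Lemma power_series_abs_le f y s Cc c x : power_series_at f y s c -> coef_bound c Cc s -> 0 < s ->
  0 <= Cc -> Rabs (x - y) < s ->
  Rabs (f x) <= Cc / (1 - Rabs (x - y) / s).
Proof.
  intros Hps Hcb Hs HC Hx. assert (Hq : 0 <= Rabs (x - y) / s < 1).
  { split. apply Rdiv_nonneg; auto; apply Rabs_pos. apply Rdiv_lt_1; split; auto; apply Rabs_pos. }
  destruct (infinite_sum_comparison (fun k => c k * (x - y) ^ k) (fun k => Cc * (Rabs (x - y) / s) ^ k)
             (Cc / (1 - Rabs (x - y) / s))) as [l [Hl1 Hl2]].
  - intros k. rewrite Rabs_mult, <- RPow_abs. apply coef_bound_geometric; auto using Rabs_pos.
  - apply infinite_sum_geometric; auto.
  - rewrite (uniqueness_sum _ _ _ (Hps x Hx) Hl1). auto.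
Qed.

Lemma power_series_tail_le c Cc s t l K : coef_bound c Cc s -> 0 < s -> Rabs t < s ->
  infinite_sum (fun k => c k * t ^ k) l ->
  Rabs (l - sum_f_R0 (fun k => c k * t ^ k) K) <= Cc * (Rabs t / s) ^ S K / (1 - Rabs t / s).
Proof.
  intros Hcb Hs Ht Hl. set (q := Rabs t / s).
  assert (Hq : 0 <= q < 1)
    by (unfold q; split; [apply Rdiv_nonneg; auto; apply Rabs_pos|apply Rdiv_lt_1; split; auto;
    apply Rabs_pos]).
  eapply Rle_trans; [apply (infinite_sum_tail_bound _ (fun k => Cc * q ^ k) _ (Cc / (1 - q)) K); auto|].
  - intros k. rewrite Rabs_mult, <- RPow_abs. apply coef_bound_geometric; auto using Rabs_pos.
  - apply infinite_sum_geometric; auto.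
  - right. rewrite sum_f_R0_scal_l, tech3 by lra. field. lra.
Qed.

Definition local_coefs (f : R -> R) s Cc (y : R) : nat -> R :=
  epsilon (inhabits (fun _ => 0)) (fun c => power_series_at f y s c /\ coef_bound c Cc s).

Lemma local_coefs_spec f s Cc : uniformly_analytic f s Cc -> forall y,
  power_series_at f y s (local_coefs f s Cc y) /\ coef_bound (local_coefs f s Cc y) Cc s.
Proof.
  intros H y. unfold local_coefs.
  apply (epsilon_spec (inhabits (fun _ => 0)) (fun c => power_series_at f y s c /\ coef_bound c Cc s)).
  apply H.
Qed.

Lemma infinite_sum_weighted_bounded (w v : nat -> R) W B : infinite_sum (fun j => Rabs (w j)) W ->
  (forall j, Rabs (v j) <= B) -> infinite_sum (fun j => w j * v j) (series_sum (fun j => w j * v j)).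
Proof.
  intros HW Hv. apply series_sum_spec, (infinite_sum_dominated _ (fun j => B * Rabs (w j)) (B * W)).
  - intros j. rewrite Rabs_mult, Rmult_comm. apply Rmult_le_compat_r; auto using Rabs_pos.
  - apply infinite_sum_scal; auto.
Qed.

Lemma coef_bound_abs_le c Cc s k : coef_bound c Cc s -> 0 < s -> Rabs (c k) <= Cc / s ^ k.
Proof.
  intros H Hs. assert (0 < s ^ k) by (apply pow_lt; auto). specialize (H k).
  apply Rmult_le_reg_r with (s ^ k); auto. unfold Rdiv. rewrite Rmult_assoc, Rinv_l; lra.
Qed.

(* The Taylor coefficients at [x0] of the weighted sum are the weighted sums of the local
   Taylor coefficients at the points [x0 + ctr j]; the uniform bounds make the double series
   summable. *)
Lemma real_analytic_weighted_translates g s Cc (w : nat -> R) W (ctr : nat -> R) :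
  0 < s -> 0 <= Cc -> uniformly_analytic g s Cc -> infinite_sum (fun j => Rabs (w j)) W ->
  real_analytic (fun x => series_sum (fun j => w j * g (x + ctr j))).
Proof.
  intros Hs HC Hua HW x0. exists (s / 2). split; [lra|].
  set (cf := fun j => local_coefs g s Cc (x0 + ctr j)).
  assert (Hcf : forall j, power_series_at g (x0 + ctr j) s (cf j) /\ coef_bound (cf j) Cc s)
    by (intros j; apply local_coefs_spec; auto).
  exists (fun k => series_sum (fun j => w j * cf j k)).
  intros x Hx. set (t := x - x0). set (q := Rabs t / s).
  assert (Ht : Rabs t < s) by (unfold t; lra).
  assert (Hq : 0 <= q < 1)
    by (unfold q; split; [apply Rdiv_nonneg; auto; apply Rabs_pos|apply Rdiv_lt_1; split;
    [apply Rabs_pos|lra]]).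
  assert (Hshift : forall j, x + ctr j - (x0 + ctr j) = t) by (intros; unfold t; ring).
  assert (Hrow : forall j, infinite_sum (fun k => cf j k * t ^ k) (g (x + ctr j))).
  { intros j. rewrite <- (Hshift j). apply Hcf. rewrite Hshift; auto. }
  unfold Pser.
  apply (infinite_sum_interchange (fun j k => w j * (cf j k * t ^ k)) (fun j => w j * g (x + ctr j))
           (fun k => series_sum (fun j => w j * cf j k) * t ^ k) _ (fun j => Rabs (w j)) W
           (fun K => Cc / (1 - q) * q ^ S K)).
  - intros j. apply infinite_sum_scal; auto.
  - apply (infinite_sum_weighted_bounded _ _ W (Cc / (1 - q))); auto.
    intros j. unfold q. rewrite <- (Hshift j).
    apply power_series_abs_le with (c := cf j); try apply Hcf; auto.
    rewrite Hshift; auto.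
  - intros k. apply (infinite_sum_ext (fun j => t ^ k * (w j * cf j k))); [intros; ring|].
    rewrite Rmult_comm. apply infinite_sum_scal.
    apply (infinite_sum_weighted_bounded _ _ W (Cc / s ^ k)); auto.
    intros j. apply coef_bound_abs_le; auto. apply Hcf.
  - intros; apply Rabs_pos.
  - auto.
  - rewrite <- (Rmult_0_r (Cc / (1 - q))). apply Un_cv_scal, pow_Un_cv_0; auto.
  - intros j K. rewrite sum_f_R0_scal_l, <- Rmult_minus_distr_l, Rabs_mult.
    apply Rmult_le_compat_l; [apply Rabs_pos|].
    replace (Cc / (1 - q) * q ^ S K) with (Cc * q ^ S K / (1 - q)) by (field; lra).
    apply (power_series_tail_le (cf j) Cc s); auto. apply Hcf.
Qed.

Lemma power_series_head_bound (b : nat -> R) rho W t l : 0 < rho -> Rabs t <= rho ->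
  infinite_sum (fun m => Rabs (b m) * rho ^ m) W -> infinite_sum (fun m => b m * t ^ m) l ->
  Rabs (l - b 0%nat) <= Rabs t / rho * W.
Proof.
  intros Hrho Ht HW Hl. set (q := Rabs t / rho).
  assert (Hq : 0 <= q <= 1) by (unfold q; split; [apply Rdiv_nonneg; auto; apply Rabs_pos|];
    apply Rmult_le_reg_r with rho; auto; unfold Rdiv; rewrite Rmult_assoc, Rinv_l; lra).
  assert (Hl' := infinite_sum_shift _ _ Hl). simpl in Hl'. rewrite Rmult_1_r in Hl'.
  destruct (infinite_sum_comparison (fun m => b (S m) * t ^ S m)
              (fun m => q * (Rabs (b (S m)) * rho ^ S m)) (q * (W - Rabs (b 0%nat) * 1)))
    as [l' [Hl'1 Hl'2]].
  - intros m. rewrite Rabs_mult, <- RPow_abs.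
    replace (Rabs t ^ S m) with (q ^ S m * rho ^ S m)
      by (unfold q, Rdiv; rewrite Rpow_mult_distr, pow_inv; field; apply pow_nonzero; lra).
    assert (q ^ S m <= q) by (rewrite <- (pow_1 q) at 2; apply pow_decr; auto; lia).
    assert (0 <= Rabs (b (S m)) * rho ^ S m) by (apply Rmult_le_pos; [apply Rabs_pos|apply pow_le; lra]).
    nra.
  - apply infinite_sum_scal. exact (infinite_sum_shift _ _ HW).
  - rewrite (uniqueness_sum _ _ _ Hl' Hl'1). eapply Rle_trans; [apply Hl'2|].
    apply Rmult_le_compat_l; [lra|]. assert (0 <= Rabs (b 0%nat)) by apply Rabs_pos. lra.
Qed.

Definition zeros_cluster_at (f : R -> R) x := forall d, 0 < d -> exists z,
  0 < Rabs (z - x) < d /\ f z = 0.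

(* If the coefficients below [n] vanish, [f (x0 + t) / t ^ n] tends to [a n]; at the zeros
   accumulating at [x0] it vanishes, so [a n = 0]. *)
Lemma power_series_coefs_zero f x0 r a : 0 < r -> power_series_at f x0 r a -> zeros_cluster_at f x0 ->
  forall n, a n = 0.
Proof.
  intros Hr Hps Hacc n. induction n as [n IH] using lt_wf_ind.
  set (rho := r / 2). assert (Hrho : 0 < rho) by (unfold rho; lra).
  destruct (power_series_coef_bound f x0 r a (3 * r / 4) Hps ltac:(lra)) as [B [HB Hcb]].
  destruct (coef_bound_abs_summable a B (3 * r / 4) rho Hcb ltac:(unfold rho; lra)) as [A HA].
  destruct (infinite_sum_tail _ _ n HA) as [Wn [HWn _]].
  assert (Hrn : 0 < rho ^ n) by (apply pow_lt; auto).
  set (W := / rho ^ n * Wn).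
  assert (HW : infinite_sum (fun m => Rabs (a (m + n)%nat) * rho ^ m) W).
  { apply (infinite_sum_ext (fun m => / rho ^ n * (Rabs (a (m + n)%nat) * rho ^ (m + n)))).
    - intros m. rewrite pow_add. field. lra.
    - apply infinite_sum_scal; auto. }
  assert (HW0 : 0 <= W) by (apply infinite_sum_nonneg with (2 := HW); intros; apply Rmult_le_pos;
    [apply Rabs_pos|apply pow_le; lra]).
  apply NNPP; intro Hne. assert (Han : 0 < Rabs (a n)) by (apply Rabs_pos_lt; auto).
  destruct (Hacc (Rmin rho (rho * Rabs (a n) / (W + 1)))) as [z [[Hz1 Hz2] Hz3]].
  { apply Rmin_glb_lt; auto. apply Rdiv_lt_0_compat; [apply Rmult_lt_0_compat|]; lra. }
  set (t := z - x0) in *.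
  assert (Ht1 : Rabs t < rho) by (eapply Rlt_le_trans; [apply Hz2|apply Rmin_l]).
  assert (Ht2 : Rabs t < rho * Rabs (a n) / (W + 1)) by (eapply Rlt_le_trans; [apply Hz2|apply Rmin_r]).
  assert (Hs := Hps z ltac:(unfold rho in Ht1; unfold t in *; lra)). unfold Pser in Hs.
  rewrite Hz3 in Hs. fold t in Hs.
  apply (infinite_sum_drop_zeros _ _ n) in Hs; [|intros i Hi; simpl; rewrite (IH i Hi); ring].
  assert (Htn : t ^ n <> 0) by (apply pow_nonzero; intro E; rewrite E, Rabs_R0 in Hz1; lra).
  assert (Hs' : infinite_sum (fun m => a (m + n)%nat * t ^ m) 0).
  { replace 0 with (/ t ^ n * 0) by ring.
    apply (infinite_sum_ext (fun m => / t ^ n * (a (m + n)%nat * t ^ (m + n)))).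
    - intros m. rewrite pow_add. field; auto.
    - apply infinite_sum_scal; auto. }
  assert (Hhead := power_series_head_bound (fun m => a (m + n)%nat) rho W t 0 Hrho ltac:(lra) HW Hs').
  simpl in Hhead. rewrite Rminus_0_l, Rabs_Ropp in Hhead.
  assert (Rabs t / rho * W < Rabs (a n)); [|lra].
  apply Rle_lt_trans with (rho * Rabs (a n) / (W + 1) / rho * W).
  - apply Rmult_le_compat_r; auto. unfold Rdiv.
    apply Rmult_le_compat_r; [left; apply Rinv_0_lt_compat|]; lra.
  - replace (rho * Rabs (a n) / (W + 1) / rho * W) with (Rabs (a n) * (W / (W + 1))) by (field; lra).
    rewrite <- (Rmult_1_r (Rabs (a n))) at 2. apply Rmult_lt_compat_l; auto. apply Rdiv_lt_1; lra.
Qed.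

Lemma real_analytic_locally_zero f x : real_analytic f -> zeros_cluster_at f x -> exists d,
  0 < d /\ forall z, Rabs (z - x) < d -> f z = 0.
Proof.
  intros Hf Hacc. destruct (Hf x) as [r [Hr [a Ha]]].
  assert (Hz := power_series_coefs_zero f x r a Hr Ha Hacc).
  exists r; split; auto. intros z Hzr. specialize (Ha z Hzr). unfold Pser in Ha.
  apply (uniqueness_sum _ _ _ Ha). apply infinite_sum_ext with (fun _ => 0); [intros; rewrite Hz; ring|].
  exact (infinite_sum_finite (fun _ => 0) 0 (fun _ _ => eq_refl)).
Qed.

Lemma real_analytic_zero_right f x : real_analytic f -> (exists d, 0 < d /\ forall z,
  Rabs (z - x) < d -> f z = 0) ->
  forall y, x <= y -> f y = 0.
Proof.
  intros Hf [d [Hd Hdd]] y Hxy. apply NNPP; intro Hy.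
  set (E := fun b => x <= b /\ forall z, x <= z <= b -> f z = 0).
  assert (HE : E x). { split; [lra|]. intros z Hz. apply Hdd. replace (z - x) with 0 by lra.
  rewrite Rabs_R0; auto. }
  assert (Hb : bound E). { exists y. intros b [Hb1 Hb2]. destruct (Rle_dec b y); auto.
  exfalso; apply Hy, Hb2; lra. }
  destruct (completeness E Hb (ex_intro _ x HE)) as [c [Hc1 Hc2]].
  assert (Hxd : E (x + d/2)).
  { split; [lra|]. intros z Hz. apply Hdd. apply Rabs_def1; lra. }
  assert (Hcx : x + d/2 <= c) by (apply Hc1; auto).
  assert (Hbelow : forall z, x <= z < c -> f z = 0).
  { intros z Hz. apply NNPP; intro N. assert (c <= z); [|lra].
    apply Hc2. intros b [Hb1 Hb2]. destruct (Rle_dec b z); auto. exfalso; apply N, Hb2; lra. }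
  assert (Hacc : zeros_cluster_at f c).
  { intros e He. exists (c - Rmin e (c - x) / 2).
    assert (0 < Rmin e (c - x)) by (apply Rmin_glb_lt; lra).
    assert (Rmin e (c - x) <= e) by apply Rmin_l. assert (Rmin e (c - x) <= c - x) by apply Rmin_r.
    split. split; apply Rabs_def1 || (rewrite Rabs_left; lra); lra.
    apply Hbelow; lra. }
  destruct (real_analytic_locally_zero f c Hf Hacc) as [dc [Hdc Hdcc]].
  assert (E (c + dc/2)).
  { split; [lra|]. intros z Hz. destruct (Rlt_le_dec z c). apply Hbelow; lra.
    apply Hdcc; apply Rabs_def1; lra. }
  assert (c + dc/2 <= c) by (apply Hc1; auto). lra.
Qed.

Lemma real_analytic_reflect f : real_analytic f -> real_analytic (fun x => f (- x)).
Proof.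
  intros Hf x0. destruct (Hf (- x0)) as [r [Hr [a Ha]]]. exists r; split; auto.
  exists (fun n => a n * (-1) ^ n). intros x Hx. unfold Pser.
  assert (H := Ha (- x) ltac:(replace (- x - - x0) with (- (x - x0)) by ring; rewrite Rabs_Ropp; auto)).
  unfold Pser in H. apply infinite_sum_ext with (2 := H). intros n.
  replace (- x - - x0) with ((-1) * (x - x0)) by ring.
  rewrite Rpow_mult_distr. ring.
Qed.

Lemma real_analytic_identity f x : real_analytic f -> zeros_cluster_at f x -> forall y, f y = 0.
Proof.
  intros Hf Hacc y. destruct (Rle_dec x y).
  - apply real_analytic_zero_right with x; auto. apply real_analytic_locally_zero; auto.
  - replace y with (- - y) by ring.
    apply (real_analytic_zero_right (fun z => f (- z)) (- x)); [apply real_analytic_reflect; auto| |lra].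
    destruct (real_analytic_locally_zero f x Hf Hacc) as [d [Hd Hdd]]. exists d; split; auto.
    intros z Hz. apply Hdd. replace (- z - x) with (- (z - - x)) by ring. rewrite Rabs_Ropp; auto.
Qed.

(** * Oscillatory integrals *)

(* Van der Corput's first estimate: write [g o psi = (g o psi) psi' / c + (g o psi) (1 - psi' / c)];
   the first term integrates exactly to a difference of primitives of [g], bounded since [g] has
   mean zero. *)
Lemma oscillatory_integral_bound g psi psi' a b c B th : a <= b ->
  continuity g -> (forall t, g (t + 1) = g t) -> Rint g 0 1 = 0 -> (forall t, Rabs (g t) <= B) ->
  continuity psi -> continuity psi' -> (forall x, a <= x <= b -> derivable_pt_lim psi x (psi' x)) ->
  c <> 0 -> (forall x, a <= x <= b -> Rabs (psi' x - c) <= th * Rabs c) ->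
  Rabs (Rint (fun x => g (psi x)) a b) <= 2 * B / Rabs c + B * th * (b - a).
Proof.
  intros Hab Hg Hp H0 HB Hpsi Hpsi' Hd Hc Hth.
  assert (Hc0 : 0 < Rabs c) by (apply Rabs_pos_lt; auto).
  assert (Hgp : continuity (fun x => g (psi x))) by (apply (continuity_comp psi g); auto).
  assert (Hq : continuity (fun x => 1 - psi' x / c)).
  { apply continuity_minus; [apply continuity_cst|].
    unfold Rdiv. apply continuity_mult; auto using continuity_cst. }
  assert (Hexact : Rabs (Rint (fun x => g (psi x) * psi' x) a b) <= 2 * B).
  { rewrite (Rint_primitive _ (fun x => Rint g 0 (psi x))); auto.
    2:{ apply continuity_mult; auto. }
    - unfold Rminus. eapply Rle_trans; [apply Rabs_triang|]. rewrite Rabs_Ropp.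
      assert (Hb := Rint_mean_zero_bounded g Hg Hp B H0 HB (psi b)).
      assert (Ha := Rint_mean_zero_bounded g Hg Hp B H0 HB (psi a)). lra.
    - intros x Hx. apply (derivable_pt_lim_comp psi (fun t => Rint g 0 t)); auto.
      apply derivable_pt_lim_Rint; auto. }
  assert (Herror : Rabs (Rint (fun x => g (psi x) * (1 - psi' x / c)) a b) <= B * th * (b - a)).
  { apply Rint_abs_le; [auto|apply continuity_mult; auto|]. intros x Hx. rewrite Rabs_mult.
    apply Rmult_le_compat; auto using Rabs_pos.
    replace (1 - psi' x / c) with (- (psi' x - c) / c) by (field; auto). unfold Rdiv.
    rewrite Rabs_mult, Rabs_Ropp, Rabs_inv. apply Rmult_le_reg_r with (Rabs c); auto.
    rewrite Rmult_assoc, Rinv_l, Rmult_1_r by lra. apply Hth; auto. }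
  replace (Rint (fun x => g (psi x)) a b) with
    (/ c * Rint (fun x => g (psi x) * psi' x) a b + Rint (fun x => g (psi x) * (1 - psi' x / c)) a b).
  2:{ assert (continuity (fun x => g (psi x) * psi' x)) by (apply continuity_mult; auto).
      rewrite <- Rint_scal, <- Rint_plus by (try apply continuity_scal; try apply continuity_mult; auto).
      f_equal. apply functional_extensionality; intros x. field; auto. }
  eapply Rle_trans; [apply Rabs_triang|]. rewrite Rabs_mult, Rabs_inv.
  apply Rplus_le_compat; auto. unfold Rdiv. rewrite (Rmult_comm (2 * B)).
  apply Rmult_le_compat_l; auto. left; apply Rinv_0_lt_compat; auto.
Qed.

Lemma subdivision_point_bounds a b m i : a <= b -> (i < m)%nat ->
  a <= a + INR i * (b - a) / INR m /\ a + INR (S i) * (b - a) / INR m <= b.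
Proof.
  intros Hab Hi. assert (Hm : 0 < INR m) by (apply lt_0_INR; lia).
  assert (Hi' : INR (S i) <= INR m) by (apply le_INR; lia). assert (0 <= INR i) by apply pos_INR.
  split.
  - assert (0 <= INR i * (b - a) / INR m) by (apply Rdiv_nonneg; [apply Rmult_le_pos|]; lra). lra.
  - apply Rplus_le_reg_l with (- a). apply Rmult_le_reg_r with (INR m); auto.
    replace ((- a + (a + INR (S i) * (b - a) / INR m)) * INR m) with (INR (S i) * (b - a))
      by (field; lra).
    replace ((- a + b) * INR m) with (INR m * (b - a)) by ring. apply Rmult_le_compat_r; lra.
Qed.

Section Fibre_oscillation.
Variables (phi : R -> R -> R) (psi dpsi : nat -> R -> R) (h : R -> R) (shift : nat -> R) (P MF M : R).
Hypotheses (Hphi : cont_T2 phi) (HM : forall x y, Rabs (phi x y) <= M) (HP : 2 <= Rabs P)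
  (Hh : continuity h) (Hdpsi : forall n, continuity (dpsi n))
  (Hder : forall n x, derivable_pt_lim (psi n) x (dpsi n x))
  (Happ : forall n x, Rabs (dpsi n x / P ^ n - h x) <= MF / Rabs P ^ n).

Let M_nonneg : 0 <= M := Rle_trans _ _ _ (Rabs_pos _) (HM 0 0).

Let MF_nonneg : 0 <= MF.
Proof.
  assert (H := Happ 0 0). simpl in H. rewrite !Rdiv_1_r in H. apply Rle_trans with (2 := H), Rabs_pos.
Qed.

Let Pn_pos n : 0 < Rabs P ^ n.
Proof. apply pow_lt; lra. Qed.

Let psi_continuity n : continuity (psi n).
Proof. intros x. apply derivable_continuous_pt. exists (dpsi n x). apply Hder. Qed.

Definition fibre_deviation n x := fibre_centered phi (x + shift n) (psi n x).

Lemma fibre_deviation_continuity n : continuity (fibre_deviation n).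
Proof.
  apply continuity_minus.
  - apply cont_T2_comp; auto using continuity_translate.
  - apply continuity_shift, fibre_mean_continuity; auto.
Qed.

Definition eventually_small u v e :=
  exists N, forall n, (n >= N)%nat -> Rabs (Rint (fibre_deviation n) u v) <= e.

Lemma eventually_small_chasles u v w e1 e2 :
  eventually_small u v e1 -> eventually_small v w e2 -> eventually_small u w (e1 + e2).
Proof.
  intros [N1 H1] [N2 H2]. exists (N1 + N2)%nat. intros n Hn.
  rewrite <- (Rint_chasles _ (fibre_deviation_continuity n) u v w).
  eapply Rle_trans; [apply Rabs_triang|]. apply Rplus_le_compat; [apply H1|apply H2]; lia.
Qed.

Lemma eventually_small_weaken u v e e' : e <= e' -> eventually_small u v e -> eventually_small u v e'.
Proof. intros H [N HN]. exists N. intros n Hn. specialize (HN n Hn). lra. Qed.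

Lemma eventually_small_empty u e : 0 <= e -> eventually_small u u e.
Proof.
  intros He. exists 0%nat. intros n _. rewrite Rint_same, Rabs_R0; auto using fibre_deviation_continuity.
Qed.

Lemma eventually_small_trivial u v : u <= v -> eventually_small u v (2 * M * (v - u)).
Proof.
  intros Huv. exists 0%nat. intros n _. apply Rint_abs_le; auto using fibre_deviation_continuity.
  intros; apply fibre_centered_abs_le; auto.
Qed.

Lemma eventually_small_subdivide u v m e : (0 < m)%nat ->
  (forall i, (i < m)%nat ->
    eventually_small (u + INR i * (v - u) / INR m) (u + INR (S i) * (v - u) / INR m) e) ->
  eventually_small u v (INR m * e).
Proof.
  intros Hm H. assert (Hm0 : INR m <> 0) by (apply not_0_INR; lia).
  assert (K : forall k, (k <= m)%nat -> eventually_small u (u + INR k * (v - u) / INR m) (INR k * e)).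
  { induction k as [|k IH]; intros Hk.
    - replace (u + INR 0 * (v - u) / INR m) with u by (simpl; field; auto).
      replace (INR 0 * e) with 0 by (simpl; ring). apply eventually_small_empty; lra.
    - replace (INR (S k) * e) with (INR k * e + e) by (rewrite S_INR; ring).
      apply eventually_small_chasles with (u + INR k * (v - u) / INR m); [apply IH; lia|apply H; lia]. }
  replace v with (u + INR m * (v - u) / INR m) at 1 by (field; auto). apply K; lia.
Qed.

Lemma fibre_deviation_freeze n u v e1 : u <= v ->
  (forall x y, u <= x <= v -> Rabs (phi (x + shift n) y - phi (u + shift n) y) <= e1) ->
  Rabs (Rint (fibre_deviation n) u v - Rint (fun x => fibre_centered phi (u + shift n) (psi n x)) u v)
    <= 2 * e1 * (v - u).
Proof.
  intros Huv He1.
  assert (Hg : continuity (fun x => fibre_centered phi (u + shift n) (psi n x)))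
    by (apply (continuity_comp (psi n)); auto using fibre_centered_continuity).
  rewrite <- Rint_minus by auto using fibre_deviation_continuity.
  apply Rint_abs_le; [auto|apply continuity_minus; auto using fibre_deviation_continuity|].
  intros x Hx. apply fibre_centered_close; auto.
Qed.

Lemma phase_derivative_near_constant n u v d0 e2 x :
  (forall x, u <= x <= v -> Rabs (h x - h u) <= e2) -> 0 < d0 -> d0 <= Rabs (h u) -> u <= x <= v ->
  Rabs (dpsi n x - P ^ n * h u) <= (MF / Rabs P ^ n + e2) / d0 * Rabs (P ^ n * h u).
Proof.
  intros He2 Hd0 Hd0u Hx. assert (HPn := Pn_pos n).
  assert (HPn0 : P ^ n <> 0) by (apply pow_nonzero; intro E; rewrite E, Rabs_R0 in HP; lra).
  replace (dpsi n x - P ^ n * h u) with (P ^ n * ((dpsi n x / P ^ n - h x) + (h x - h u)))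
    by (field; auto).
  rewrite !Rabs_mult, <- RPow_abs.
  replace ((MF / Rabs P ^ n + e2) / d0 * (Rabs P ^ n * Rabs (h u)))
    with (Rabs P ^ n * ((MF / Rabs P ^ n + e2) * (Rabs (h u) / d0))) by (field; lra).
  apply Rmult_le_compat_l; [lra|]. eapply Rle_trans; [apply Rabs_triang|].
  assert (1 <= Rabs (h u) / d0)
    by (apply Rmult_le_reg_r with d0; auto; unfold Rdiv; rewrite Rmult_assoc, Rinv_l; lra).
  assert (0 <= MF / Rabs P ^ n) by (apply Rdiv_nonneg; auto).
  assert (H1 := Happ n x). assert (H2 := He2 x Hx). assert (H3 := Rabs_pos (h x - h u)). nra.
Qed.

(* On a piece where [h] stays away from zero, [psi n] has derivative close to the constant
   [P ^ n * h u], so the frozen integrand oscillates fast. *)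
Lemma fibre_deviation_piece_bound n u v d0 e1 e2 : u <= v ->
  (forall x y, u <= x <= v -> Rabs (phi (x + shift n) y - phi (u + shift n) y) <= e1) ->
  (forall x, u <= x <= v -> Rabs (h x - h u) <= e2) -> 0 < d0 -> d0 <= Rabs (h u) ->
  Rabs (Rint (fibre_deviation n) u v) <=
    (2 * e1 + 2 * M * e2 / d0) * (v - u) + (4 * M + 2 * M * MF * (v - u)) / (Rabs P ^ n * d0).
Proof.
  intros Huv He1 He2 Hd0 Hd0u. assert (HPn := Pn_pos n).
  assert (He20 : 0 <= e2) by (apply Rle_trans with (2 := He2 u ltac:(lra)), Rabs_pos).
  assert (Hhu : P ^ n * h u <> 0).
  { apply Rmult_integral_contrapositive.
    split; [apply pow_nonzero; intro E; rewrite E, Rabs_R0 in HP; lra|].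
    intro E. rewrite E, Rabs_R0 in Hd0u. lra. }
  assert (Hosc := oscillatory_integral_bound (fibre_centered phi (u + shift n)) (psi n) (dpsi n) u v
    (P ^ n * h u) (2 * M) ((MF / Rabs P ^ n + e2) / d0) Huv (fibre_centered_continuity phi Hphi _)
    (fibre_centered_periodic phi Hphi _) (fibre_centered_mean_zero phi Hphi _)
    (fibre_centered_abs_le phi Hphi M HM _) (psi_continuity n) (Hdpsi n) (fun x _ => Hder n x) Hhu
    (fun x Hx => phase_derivative_near_constant n u v d0 e2 x He2 Hd0 Hd0u Hx)).
  assert (Hc : 2 * (2 * M) / Rabs (P ^ n * h u) <= 4 * M / (Rabs P ^ n * d0)).
  { rewrite Rabs_mult, <- RPow_abs. unfold Rdiv. replace (2 * (2 * M)) with (4 * M) by ring.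
    apply Rmult_le_compat_l; [lra|]. apply Rinv_le_contravar; [apply Rmult_lt_0_compat; auto|].
    apply Rmult_le_compat_l; lra. }
  assert (Hfr := fibre_deviation_freeze n u v e1 Huv He1).
  apply Rabs_le_inv in Hfr. apply Rabs_le_inv in Hosc. apply Rabs_le.
  replace ((2 * e1 + 2 * M * e2 / d0) * (v - u) + (4 * M + 2 * M * MF * (v - u)) / (Rabs P ^ n * d0))
    with (2 * e1 * (v - u) + 4 * M / (Rabs P ^ n * d0) + 2 * M * ((MF / Rabs P ^ n + e2) / d0) * (v - u))
    by (field; lra).
  lra.
Qed.

Lemma eventually_small_piece u v d0 e1 e2 delta : u <= v ->
  (forall n x y, u <= x <= v -> Rabs (phi (x + shift n) y - phi (u + shift n) y) <= e1) ->
  (forall x, u <= x <= v -> Rabs (h x - h u) <= e2) -> 0 < d0 -> d0 <= Rabs (h u) -> 0 < delta ->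
  eventually_small u v ((2 * e1 + 2 * M * e2 / d0) * (v - u) + delta).
Proof.
  intros Huv He1 He2 Hd0 Hd0u Hdelta. set (Q := 4 * M + 2 * M * MF * (v - u)).
  assert (HQ : 0 <= Q) by (unfold Q; assert (0 <= M * MF * (v - u))
    by (repeat apply Rmult_le_pos; lra); lra).
  destruct (Pow_x_infinity P ltac:(lra) (Q / (delta * d0) + 1)) as [N HN].
  exists N. intros n Hn. eapply Rle_trans; [apply (fibre_deviation_piece_bound n u v d0 e1 e2); auto|].
  apply Rplus_le_compat_l. assert (HPn := Pn_pos n).
  assert (Hbig : Q / (delta * d0) <= Rabs P ^ n)
    by (specialize (HN n Hn); rewrite <- RPow_abs in HN; lra).
  assert (Hbig' : Q <= Rabs P ^ n * (delta * d0)).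
  { replace Q with (Q / (delta * d0) * (delta * d0)) by (field; lra).
    apply Rmult_le_compat_r; [apply Rmult_le_pos|]; lra. }
  assert (Hpos : 0 < Rabs P ^ n * d0) by (apply Rmult_lt_0_compat; lra).
  unfold Rdiv. apply Rmult_le_reg_r with (Rabs P ^ n * d0); auto.
  rewrite Rmult_assoc, Rinv_l, Rmult_1_r by (apply Rgt_not_eq; exact Hpos). unfold Q in Hbig'. nra.
Qed.

Lemma eventually_small_fine_pieces a b lam A eps : a <= b -> 0 < lam -> 0 < eps ->
  (forall u v eta, a <= u -> u <= v -> v <= b -> v - u < lam -> 0 < eta ->
     eventually_small u v (A * (v - u) + eta)) ->
  eventually_small a b (A * (b - a) + eps).
Proof.
  intros Hab Hlam Heps Hpiece. destruct (Req_dec a b) as [<-|Hab']; [apply Hpiece; lra|].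
  set (L := b - a). assert (HL : 0 < L) by (unfold L; lra).
  destruct (archimed_cor1 (lam / L) ltac:(apply Rdiv_lt_0_compat; auto)) as [m [Hm1 Hm2]].
  assert (Hmpos : 0 < INR m) by (apply lt_0_INR; auto).
  assert (Hell : L / INR m < lam).
  { apply Rmult_lt_reg_r with (/ L); [apply Rinv_0_lt_compat; auto|].
    replace (L / INR m * / L) with (/ INR m) by (field; lra). auto. }
  replace (A * L + eps) with (INR m * (A * (L / INR m) + eps / INR m)) by (field; lra).
  apply eventually_small_subdivide; auto. intros i Hi.
  destruct (subdivision_point_bounds a b m i Hab Hi) as [Hu Hv].
  replace (L / INR m) with (a + INR (S i) * (b - a) / INR m - (a + INR i * (b - a) / INR m))
    by (unfold L; rewrite S_INR; field; lra).
  assert (Hlen : a + INR (S i) * (b - a) / INR m - (a + INR i * (b - a) / INR m) = L / INR m)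
    by (unfold L; rewrite S_INR; field; lra).
  apply Hpiece; auto; [| |apply Rdiv_lt_0_compat; lra].
  - assert (0 < L / INR m) by (apply Rdiv_lt_0_compat; lra). lra.
  - rewrite Hlen; auto.
Qed.

Lemma eventually_small_nonvanishing a b eps : a <= b -> (forall x, a <= x <= b -> h x <> 0) -> 0 < eps ->
  eventually_small a b eps.
Proof.
  intros Hab Hhz Heps. set (L := b - a). assert (HL : 0 <= L) by (unfold L; lra).
  destruct (continuity_ab_min (fun x => Rabs (h x)) a b Hab) as [z0 [Hz0 Hz0ab]].
  { intros c _. apply (continuity_pt_comp h Rabs); [apply Hh|apply Rcontinuity_abs]. }
  set (d0 := Rabs (h z0)). assert (Hd0 : 0 < d0) by (apply Rabs_pos_lt, Hhz; auto).
  set (e1 := eps / (8 * (L + 1))). assert (He1 : 0 < e1) by (unfold e1; apply Rdiv_lt_0_compat; lra).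
  set (e2 := eps * d0 / (8 * (M + 1) * (L + 1))).
  assert (He2 : 0 < e2) by (unfold e2; apply Rdiv_lt_0_compat; [apply Rmult_lt_0_compat|]; nra).
  destruct (cont_T2_unif_x phi Hphi e1 He1) as [rho [Hrho Hrr]].
  destruct (@Heine_cor2 h a b (fun x _ => Hh x) (mkposreal e2 He2)) as [d2 Hd2]; simpl in Hd2.
  assert (Hlam : 0 < Rmin rho d2) by (apply Rmin_glb_lt; auto; apply cond_pos).
  apply eventually_small_weaken with ((2 * e1 + 2 * M * e2 / d0) * L + eps / 2).
  { replace ((2 * e1 + 2 * M * e2 / d0) * L) with
      (eps / 4 * (L / (L + 1)) + eps / 4 * (M / (M + 1) * (L / (L + 1)))) by (unfold e1, e2; field; lra).
    assert (L / (L + 1) <= 1) by (left; apply Rdiv_lt_1; lra).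
    assert (0 <= M / (M + 1) <= 1) by (split; [apply Rdiv_nonneg|left; apply Rdiv_lt_1]; lra).
    assert (0 <= L / (L + 1)) by (apply Rdiv_nonneg; lra).
    assert (M / (M + 1) * (L / (L + 1)) <= 1) by nra. nra. }
  apply eventually_small_fine_pieces with (Rmin rho d2); try lra.
  intros u v eta Hau Huv Hvb Hlen Heta. apply eventually_small_piece; auto.
  - intros n x y Hx. left. apply Hrr. replace (x + shift n - (u + shift n)) with (x - u) by ring.
    rewrite Rabs_pos_eq by lra. apply Rle_lt_trans with (v - u); [lra|].
    eapply Rlt_le_trans; [apply Hlen|apply Rmin_l].
  - intros x Hx. left. apply Hd2; try lra. rewrite Rabs_pos_eq by lra.
    apply Rle_lt_trans with (v - u); [lra|]. eapply Rlt_le_trans; [apply Hlen|apply Rmin_r].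
  - apply Hz0; lra.
Qed.

Lemma eventually_small_isolated_zero a b eps : a <= b ->
  (forall z1 z2, a <= z1 <= b -> a <= z2 <= b -> h z1 = 0 -> h z2 = 0 -> z1 = z2) -> 0 < eps ->
  eventually_small a b eps.
Proof.
  intros Hab Hsep Heps.
  destruct (classic (exists z, a <= z <= b /\ h z = 0)) as [[z [Hz Hz0]]|Hno].
  2:{ apply eventually_small_nonvanishing; auto. intros x Hx E. apply Hno; eauto. }
  set (eta := eps / (8 * (M + 1))). assert (Heta : 0 < eta) by (unfold eta; apply Rdiv_lt_0_compat; lra).
  set (l := Rmax a (z - eta)). set (r := Rmin b (z + eta)).
  assert (Hl1 : a <= l) by apply Rmax_l. assert (Hl2 : z - eta <= l) by apply Rmax_r.
  assert (Hr1 : r <= b) by apply Rmin_l. assert (Hr2 : r <= z + eta) by apply Rmin_r.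
  assert (Hlz : l <= z) by (unfold l, Rmax; destruct (Rle_dec a (z - eta)); lra).
  assert (Hzr : z <= r) by (unfold r, Rmin; destruct (Rle_dec b (z + eta)); lra).
  assert (Honly : forall x, a <= x <= b -> h x = 0 -> x = z) by (intros; apply Hsep; auto).
  replace eps with (eps / 4 + eps / 2 + eps / 4) by field.
  apply eventually_small_chasles with r; [apply eventually_small_chasles with l|].
  - destruct (Req_dec a l) as [<-|E]; [apply eventually_small_empty; lra|].
    assert (l = z - eta) by (unfold l, Rmax in *; destruct (Rle_dec a (z - eta)); lra).
    apply eventually_small_nonvanishing; try lra. intros x Hx E2.
    assert (x = z) by (apply Honly; auto; lra). lra.
  - apply eventually_small_weaken with (2 * M * (r - l)); [|apply eventually_small_trivial; lra].
    apply Rle_trans with (2 * M * (2 * eta)); [apply Rmult_le_compat_l; lra|].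
    unfold eta. replace (2 * M * (2 * (eps / (8 * (M + 1))))) with (eps / 2 * (M / (M + 1)))
      by (field; lra).
    assert (M / (M + 1) < 1) by (apply Rdiv_lt_1; lra). nra.
  - destruct (Req_dec r b) as [->|E]; [apply eventually_small_empty; lra|].
    assert (r = z + eta) by (unfold r, Rmin in *; destruct (Rle_dec b (z + eta)); lra).
    apply eventually_small_nonvanishing; try lra. intros x Hx E2.
    assert (x = z) by (apply Honly; auto; lra). lra.
Qed.

Lemma fibre_deviation_Rint_cv_0 s : 0 < s ->
  (forall z1 z2, 0 <= z1 <= 1 -> 0 <= z2 <= 1 -> Rabs (z1 - z2) < s -> h z1 = 0 -> h z2 = 0 ->
    z1 = z2) ->
  Un_cv (fun n => Rint (fibre_deviation n) 0 1) 0.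
Proof.
  intros Hs Hsep eps Heps.
  assert (Hsmall : eventually_small 0 1 (0 * (1 - 0) + eps / 2)).
  { apply eventually_small_fine_pieces with s; try lra.
    intros u v eta Hu Huv Hv Hlen Heta. rewrite Rmult_0_l, Rplus_0_l.
    apply eventually_small_isolated_zero; auto.
    intros z1 z2 Hz1 Hz2. apply Hsep; try lra. apply Rabs_def1; lra. }
  destruct Hsmall as [N HN]. exists N. intros n Hn. unfold Rdist. rewrite Rminus_0_r.
  specialize (HN n Hn). lra.
Qed.

End Fibre_oscillation.

(** * The skew product *)

Lemma integer_valued_constant k : continuity k -> (forall x, exists n : Z, k x = IZR n) ->
  forall x y, k x = k y.
Proof.
  intros Hk Hint.
  assert (Hle : forall x y, x <= y -> k x = k y).
  { intros x y Hxy. destruct (Hint x) as [a Ha]. destruct (Hint y) as [b Hb].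
    apply NNPP; intro Hne. assert (Hab : a <> b) by (intro; subst; congruence).
    set (c := IZR (Z.min a b) + / 2).
    assert (Hsign : (k x - c) * (k y - c) <= 0).
    { rewrite Ha, Hb. unfold c. destruct (Z.min_spec a b) as [[Hm E]|[Hm E]]; rewrite E.
      - assert (IZR a + 1 <= IZR b) by (rewrite <- plus_IZR; apply IZR_le; lia). nra.
      - assert (IZR b + 1 <= IZR a) by (rewrite <- plus_IZR; apply IZR_le; lia). nra. }
    destruct (IVT_cor (fun t => k t - c) x y) as [z [_ Hz]]; auto.
    { apply continuity_minus; auto using continuity_cst. }
    destruct (Hint z) as [n Hn]. cbv beta in Hz.
    assert (E : IZR (2 * n) = IZR (2 * Z.min a b + 1))
      by (rewrite plus_IZR, !mult_IZR; unfold c in Hz; lra).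
    apply eq_IZR in E. lia. }
  intros x y. destruct (Rle_dec x y); [apply Hle; auto|symmetry; apply Hle; lra].
Qed.

Lemma circle_lift_degree F : continuity F -> circle_lift F ->
  exists e : Z, forall x, F (x + 1) = F x + IZR e.
Proof.
  intros Hc Hl. destruct (Hl 0) as [e He]. exists e. intros x.
  enough (F (x + 1) - F x = F (0 + 1) - F 0) by lra.
  apply (integer_valued_constant (fun t => F (t + 1) - F t)).
  - apply continuity_minus; auto using continuity_shift.
  - intros t. destruct (Hl t) as [n Hn]. exists n. lra.
Qed.

Lemma circle_lift_deriv_periodic F : real_analytic F -> circle_lift F -> forall x,
  deriv F (x + 1) = deriv F x.
Proof.
  intros Ha Hl. destruct (circle_lift_degree F (real_analytic_continuity F Ha) Hl) as [e He]. intros x.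
  apply (uniqueness_limite (fun t => F (t + 1)) x).
  - apply derivable_pt_lim_shift, real_analytic_derivable; auto.
  - replace (fun t => F (t + 1)) with (fun t => F t + IZR e)
    by (apply functional_extensionality; intros; auto).
    rewrite <- (Rplus_0_r (deriv F x)). apply derivable_pt_lim_plus, derivable_pt_lim_const.
    apply real_analytic_derivable; auto.
Qed.

Fixpoint partial_sum (u : nat -> R) (n : nat) : R :=
  match n with
  | O => 0
  | S k => partial_sum u k + u k
  end.

Lemma partial_sum_S u k : partial_sum u (S k) = sum_f_R0 u k.
Proof. induction k as [|k IH]; simpl in *; [ring|]. rewrite <- IH. reflexivity. Qed.

Lemma geometric_weights_tail (P MF : R) (g : nat -> R) : 2 <= Rabs P -> (forall j, Rabs (g j) <= MF) ->
  infinite_sum (fun j => / P ^ S j * g j) (series_sum (fun j => / P ^ S j * g j)) /\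
  forall n, Rabs (series_sum (fun j => / P ^ S j * g j) - partial_sum (fun j => / P ^ S j * g j) n)
              <= MF / Rabs P ^ n.
Proof.
  intros HP Hg. set (th := / Rabs P).
  assert (Hth : 0 < th <= / 2)
    by (unfold th; split; [apply Rinv_0_lt_compat|apply Rinv_le_contravar]; lra).
  assert (HMF : 0 <= MF) by (apply Rle_trans with (2 := Hg 0%nat), Rabs_pos).
  assert (Hmaj : forall j, Rabs (/ P ^ S j * g j) <= (MF * th) * th ^ j).
  { intros j. rewrite Rabs_mult, Rabs_inv, <- RPow_abs.
    replace (MF * th * th ^ j) with (th ^ S j * MF) by (simpl; ring).
    unfold th. rewrite <- pow_inv. apply Rmult_le_compat_l; auto.
    apply pow_le; left; apply Rinv_0_lt_compat; lra. }
  assert (Hv : infinite_sum (fun j => (MF * th) * th ^ j) (MF * th / (1 - th)))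
    by (apply infinite_sum_geometric; lra).
  assert (Hs : infinite_sum (fun j => / P ^ S j * g j) (series_sum (fun j => / P ^ S j * g j))).
  { apply series_sum_spec. exact (infinite_sum_dominated _ _ _ Hmaj Hv). }
  split; auto. intros n.
  assert (Hk : MF * th / (1 - th) <= MF).
  { apply Rmult_le_reg_r with (1 - th); [lra|]. unfold Rdiv. rewrite Rmult_assoc, Rinv_l by lra. nra. }
  unfold Rdiv. rewrite <- pow_inv. fold th. destruct n as [|k].
  - rewrite pow_O, Rmult_1_r. change (partial_sum _ 0) with 0. rewrite Rminus_0_r.
    destruct (infinite_sum_comparison _ _ _ Hmaj Hv) as [l [Hl1 Hl2]].
    rewrite (uniqueness_sum _ _ _ Hs Hl1). lra.
  - rewrite partial_sum_S. eapply Rle_trans; [apply (infinite_sum_tail_bound _ _ _ _ k Hmaj Hs Hv)|].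
    rewrite sum_f_R0_scal_l, tech3 by lra.
    replace (MF * th / (1 - th) - MF * th * ((1 - th ^ S k) / (1 - th))) with
      (MF * th ^ S k * (th / (1 - th))) by (simpl; field; lra).
    rewrite <- (Rmult_1_r (MF * th ^ S k)) at 2. apply Rmult_le_compat_l.
    + apply Rmult_le_pos; auto; apply pow_le; lra.
    + apply Rmult_le_reg_r with (1 - th); [lra|]. unfold Rdiv. rewrite Rmult_assoc, Rinv_l by lra. lra.
Qed.

Lemma isolated_zeros_separated h : (forall x, ~ zeros_cluster_at h x) ->
  exists s, 0 < s /\ forall z1 z2, 0 <= z1 <= 1 -> 0 <= z2 <= 1 -> Rabs (z1 - z2) < s ->
    h z1 = 0 -> h z2 = 0 -> z1 = z2.
Proof.
  intros Hiso.
  destruct (uniform_radius_01 (fun y s => forall z1 z2, Rabs (z1 - y) < s -> Rabs (z2 - y) < s ->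
              h z1 = 0 -> h z2 = 0 -> z1 = z2)) as [s [Hs Hss]].
  - intros y s s' H1 H2 z1 z2 Hz1 Hz2. apply H1; lra.
  - intros x _. assert (Hx := Hiso x). unfold zeros_cluster_at in Hx.
    apply not_all_ex_not in Hx as [d Hd]. apply imply_to_and in Hd as [Hd Hno].
    exists (d / 2). split; [lra|]. intros y Hy z1 z2 Hz1 Hz2 E1 E2.
    apply Rabs_def2 in Hy. apply Rabs_def2 in Hz1. apply Rabs_def2 in Hz2.
    assert (Hat : forall z, Rabs (z - y) < d / 2 -> h z = 0 -> z = x).
    { intros z Hz Ez. apply Rabs_def2 in Hz. apply NNPP; intro N. apply Hno. exists z. split; auto.
      split; [apply Rabs_pos_lt; lra|apply Rabs_def1; lra]. }
    rewrite (Hat z1), (Hat z2); auto; apply Rabs_def1; lra.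
  - exists s. split; auto. intros z1 z2 Hz1 _ Hz12 E1 E2. apply (Hss z1 Hz1 z1 z2); auto.
    + rewrite Rminus_diag, Rabs_R0; auto.
    + rewrite Rabs_minus_sym; auto.
Qed.

Section Skew_product.
Variables (alpha P : R) (F Gamma : R -> R).
Hypotheses (HP : 2 <= Rabs P) (HlF : circle_lift F) (HaF : real_analytic F) (HaG : real_analytic Gamma).

Let HP0 : P <> 0.
Proof. intro E. rewrite E, Rabs_R0 in HP. lra. Qed.

Fixpoint orbit_dy (n : nat) (x : R) : R :=
  match n with
  | O => deriv Gamma x
  | S k => P * orbit_dy k x + deriv F (x + INR k * alpha)
  end.

Lemma derivable_pt_lim_orbit_y n x : derivable_pt_lim (orbit_y alpha P F Gamma n) x (orbit_dy n x).
Proof.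
  revert x. induction n as [|n IH]; intros x; simpl; [apply real_analytic_derivable; auto|].
  apply derivable_pt_lim_plus; [apply derivable_pt_lim_scal; auto|].
  apply derivable_pt_lim_shift, real_analytic_derivable; auto.
Qed.

Lemma orbit_dy_continuity n : continuity (orbit_dy n).
Proof.
  induction n as [|n IH]; simpl; [apply real_analytic_continuity, real_analytic_deriv; auto|].
  apply continuity_plus; [apply continuity_scal; auto|].
  apply continuity_shift, real_analytic_continuity, real_analytic_deriv; auto.
Qed.

Definition cocycle_term (x : R) (j : nat) := / P ^ S j * deriv F (x + INR j * alpha).

Definition limit_dy (x : R) := deriv Gamma x + series_sum (cocycle_term x).

Lemma orbit_dy_div_pow n x : orbit_dy n x / P ^ n = deriv Gamma x + partial_sum (cocycle_term x) n.
Proof.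
  induction n as [|n IH]; simpl; [field|].
  assert (P ^ n <> 0) by (apply pow_nonzero; auto).
  rewrite <- Rplus_assoc, <- IH. unfold cocycle_term. simpl. field. auto.
Qed.

Lemma deriv_F_bounded : exists MF, 0 <= MF /\ forall x, Rabs (deriv F x) <= MF.
Proof.
  apply periodic_bounded; [apply real_analytic_continuity, real_analytic_deriv; auto|].
  apply circle_lift_deriv_periodic; auto.
Qed.

Lemma cocycle_series x : infinite_sum (cocycle_term x) (series_sum (cocycle_term x)).
Proof.
  destruct deriv_F_bounded as [MF [_ HMF]].
  exact (proj1 (geometric_weights_tail P MF (fun j => deriv F (x + INR j * alpha)) HP (fun j => HMF _))).
Qed.

Lemma orbit_dy_approx : exists MF, forall n x,
  Rabs (orbit_dy n x / P ^ n - limit_dy x) <= MF / Rabs P ^ n.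
Proof.
  destruct deriv_F_bounded as [MF [_ HMF]]. exists MF. intros n x.
  rewrite orbit_dy_div_pow. unfold limit_dy. rewrite Rabs_minus_sym.
  set (u := cocycle_term x).
  replace (deriv Gamma x + series_sum u - (deriv Gamma x + partial_sum u n))
    with (series_sum u - partial_sum u n) by ring.
  exact (proj2 (geometric_weights_tail P MF _ HP (fun j => HMF (x + INR j * alpha))) n).
Qed.

Lemma limit_dy_analytic : real_analytic limit_dy.
Proof.
  destruct (periodic_uniformly_analytic (deriv F)) as [s [Cc [Hs [HC Hua]]]];
    [apply real_analytic_deriv; auto|apply circle_lift_deriv_periodic; auto|].
  set (th := / Rabs P).
  assert (Hth : 0 < th <= / 2)
    by (unfold th; split; [apply Rinv_0_lt_compat|apply Rinv_le_contravar]; lra).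
  assert (HW : infinite_sum (fun j => Rabs (/ P ^ S j)) (th / (1 - th))).
  { apply (infinite_sum_ext (fun j => th * th ^ j)); [|apply infinite_sum_geometric; lra].
    intros j. rewrite Rabs_inv, <- RPow_abs. unfold th. rewrite <- pow_inv. reflexivity. }
  replace limit_dy with
    (fun x => deriv Gamma x + 1 * series_sum (fun j => / P ^ S j * deriv F (x + INR j * alpha))).
  - apply real_analytic_plus_scal; [apply real_analytic_deriv; auto|].
    apply (real_analytic_weighted_translates (deriv F) s Cc (fun j => / P ^ S j) (th / (1 - th))
             (fun j => INR j * alpha)); auto.
  - apply functional_extensionality; intros x. unfold limit_dy, cocycle_term. ring.
Qed.

Lemma limit_dy_shift x : limit_dy (x + alpha) - P * limit_dy x =
  deriv Gamma (x + alpha) - P * deriv Gamma x - deriv F x.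
Proof.
  enough (series_sum (cocycle_term (x + alpha)) = P * series_sum (cocycle_term x) - deriv F x)
    by (unfold limit_dy; lra).
  apply (uniqueness_sum (cocycle_term (x + alpha))); [apply cocycle_series|].
  replace (P * series_sum (cocycle_term x) - deriv F x) with
    (P * series_sum (cocycle_term x) - P * cocycle_term x 0%nat)
    by (unfold cocycle_term; replace (x + INR 0 * alpha) with x by (simpl; ring); simpl; field; auto).
  eapply infinite_sum_ext;
    [|exact (infinite_sum_shift _ _ (infinite_sum_scal _ _ P (cocycle_series x)))].
  intros j. unfold cocycle_term. rewrite S_INR.
  replace (x + (INR j + 1) * alpha) with (x + alpha + INR j * alpha) by ring.
  assert (P ^ j <> 0) by (apply pow_nonzero; auto). simpl. field. auto.
Qed.

Lemma coboundary_of_limit_dy_zero : (forall x, limit_dy x = 0) ->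
  exists c, forall x, F x = Gamma (x + alpha) - P * Gamma x + c.
Proof.
  intros Hz. set (g := fun x => Gamma (x + alpha) - P * Gamma x - F x).
  assert (Hg : forall x, derivable_pt_lim g x 0).
  { intros x.
    assert (H := derivable_pt_lim_minus _ _ x _ _
      (derivable_pt_lim_minus _ _ x _ _
         (derivable_pt_lim_shift Gamma alpha x _ (real_analytic_derivable Gamma HaG (x + alpha)))
         (derivable_pt_lim_scal _ P x _ (real_analytic_derivable Gamma HaG x)))
      (real_analytic_derivable F HaF x)).
    rewrite <- limit_dy_shift, !Hz, Rmult_0_r, Rminus_0_r in H. exact H. }
  exists (- g 0). intros x. assert (E := null_derivative_eq g 0 x Hg). unfold g in *. lra.
Qed.

Lemma push_integral_deviation phi n : cont_T2 phi ->
  push_integral alpha P F Gamma n phi =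
  Rint (fibre_deviation phi (orbit_y alpha P F Gamma) (fun n => INR n * alpha) n) 0 1 + leb_T2 phi.
Proof.
  intros Hphi. unfold push_integral, fibre_deviation, fibre_centered, leb_T2.
  assert (Hpsi : continuity (orbit_y alpha P F Gamma n)).
  { intros x. apply derivable_continuous_pt. eexists. apply derivable_pt_lim_orbit_y. }
  rewrite Rint_minus, (Rint_periodic_shift (fibre_mean phi)).
  - unfold fibre_mean. ring.
  - apply fibre_mean_continuity; auto.
  - apply fibre_mean_periodic; auto.
  - apply cont_T2_comp; auto using continuity_translate.
  - apply continuity_shift, fibre_mean_continuity; auto.
Qed.

Lemma equidistributes_of_isolated_zeros : (forall x, ~ zeros_cluster_at limit_dy x) ->
  pushforward_equidistributes alpha P F Gamma.
Proof.
  intros Hiso phi Hphi.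
  destruct (isolated_zeros_separated limit_dy Hiso) as [s [Hs Hsep]].
  destruct (cont_T2_bounded phi Hphi) as [M [_ HM]].
  destruct orbit_dy_approx as [MF Happ].
  set (dev := fun n =>
    Rint (fibre_deviation phi (orbit_y alpha P F Gamma) (fun n => INR n * alpha) n) 0 1).
  assert (Hcv : Un_cv dev 0).
  { apply (fibre_deviation_Rint_cv_0 phi _ orbit_dy limit_dy _ P MF M Hphi HM HP) with s; auto.
    - apply real_analytic_continuity, limit_dy_analytic.
    - apply orbit_dy_continuity.
    - apply derivable_pt_lim_orbit_y. }
  apply (Un_cv_ext (fun n => dev n + leb_T2 phi));
    [intros n; unfold dev; rewrite push_integral_deviation; auto|].
  assert (H := CV_plus _ _ _ _ Hcv (Un_cv_const (leb_T2 phi))). rewrite Rplus_0_l in H. exact H.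
Qed.

End Skew_product.

Theorem mainTheorem17 (alpha : R) (p : Z) (F Gamma : R -> R) :
  irrational alpha ->
  (2 <= Z.abs p)%Z ->
  circle_lift F -> real_analytic F ->
  circle_lift Gamma -> real_analytic Gamma ->
  pushforward_equidistributes alpha (IZR p) F Gamma \/
  (exists c : R, forall x : R, exists k : Z,
     F x = Gamma (x + alpha) - IZR p * Gamma x + c + IZR k).
Proof.
  intros _ Hp HlF HaF _ HaG.
  assert (HP : 2 <= Rabs (IZR p)) by (rewrite <- abs_IZR; apply (IZR_le 2); lia).
  set (h := limit_dy alpha (IZR p) F Gamma).
  assert (Hh : real_analytic h) by exact (limit_dy_analytic alpha (IZR p) F Gamma HP HlF HaF HaG).
  destruct (classic (exists x, zeros_cluster_at h x)) as [[x0 Hacc]|Hiso].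
  - right.
    destruct (coboundary_of_limit_dy_zero alpha (IZR p) F Gamma HP HlF HaF HaG
                (real_analytic_identity h x0 Hh Hacc)) as [c Hc].
    exists c. intros x. exists 0%Z. rewrite Hc. ring.
  - left. apply equidistributes_of_isolated_zeros; auto.
    intros x Hx. apply Hiso. exists x. exact Hx.
Qed.
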